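(* Let $\Phi$ be the one-hidden-layer objective and $G^\Phi$ the associated map. Set $\rho_x=\max_{i\in[n]}\|x^i\|_{p_u'}$, $C_w=\rho_w\Psi^\alpha_{p_w',p_u}(\mathbf{1},\rho_u\rho_x)$ and $C_u=\rho_w\Psi^\alpha_{p_w',p_u}(\alpha,\rho_u\rho_x)$. Let $$A=2\,\mathrm{diag}(p_w'-1,\dots,p_w'-1,p_u'-1)\begin{pmatrix}2C_w\mathbf{1}\mathbf{1}^T & (2C_u+\|\alpha\|_\infty)\mathbf{1}\\ (2C_w+1)\mathbf{1}^T & 2C_u+\|\alpha\|_\infty-1\end{pmatrix}\in\mathbb{R}^{(K+1)\times(K+1)},$$ with $\mathbf{1}\in\mathbb{R}^K$ the all-ones vector. Then for $F=G^\Phi$, for all $i,k\in[K]$, $j,a\in[n_1]$, $b\in[d]$ and $(w,u)\in B_{++}$: $$\langle|\nabla_{w_k}F_{w_{i,j}}|,w_k\rangle\le A_{i,k}F_{w_{i,j}},\ \langle|\nabla_u F_{w_{i,j}}|,u\rangle\le A_{i,K+1}F_{w_{i,j}},\ \langle|\nabla_{w_k}F_{u_{ab}}|,w_k\rangle\le A_{K+1,k}F_{u_{ab}},\ \langle|\nabla_u F_{u_{ab}}|,u\rangle\le A_{K+1,K+1}F_{u_{ab}}.$$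
   Context: Setting: data $(x^i,y_i)\in\mathbb{R}^d_+\times[K]$, $i\in[n]$; $w\in\mathbb{R}^{K\times n_1}_+$ with rows $w_1,\dots,w_K$, $u\in\mathbb{R}^{n_1\times d}_+$; $\alpha\in\mathbb{R}^{n_1}$ with $\alpha_l\ge1$; $f_r(w,u)(x)=\sum_{l=1}^{n_1}w_{r,l}(\sum_{m=1}^d u_{lm}x_m)^{\alpha_l}$; $L(y,f(x))=-f_y(x)+\log\sum_{j}e^{f_j(x)}$; for $\epsilon>0$, $\Phi(w,u)=\frac1n\sum_i[-L(y_i,f(w,u)(x^i))+\sum_r f_r(w,u)(x^i)]+\epsilon(\sum_{r,l}w_{r,l}+\sum_{l,m}u_{lm})$. Given $p_w,p_u\in(1,\infty)$, $\rho_w,\rho_u>0$: $B_{++}=\{(w,u)\in\mathbb{R}^{K\times n_1}_{++}\times\mathbb{R}^{n_1\times d}_{++}:\|u\|_{p_u}\le\rho_u,\ \|w_i\|_{p_w}\le\rho_w\ \forall i\}$ (entrywise norms). $p'=p/(p-1)$, $\psi_p(z)=\operatorname{sign}(z)|z|^{p-1}$ componentwise, and $G^{\Phi}(w,u)=\big(\tfrac{\rho_w\psi_{p_w'}(\nabla_{w_1}\Phi)}{\|\psi_{p_w'}(\nabla_{w_1}\Phi)\|_{p_w}},\dots,\tfrac{\rho_w\psi_{p_w'}(\nabla_{w_K}\Phi)}{\|\psi_{p_w'}(\nabla_{w_K}\Phi)\|_{p_w}},\tfrac{\rho_u\psi_{p_u'}(\nabla_u\Phi)}{\|\psi_{p_u'}(\nabla_u\Phi)\|_{p_u}}\big)(w,u)$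 with components $F_{w_{i,j}},F_{u_{ab}}$. $\Psi^\alpha_{p,q}(\delta,t)=\big([\sum_{l\in J}(\delta_lt^{\alpha_l})^{pq/(q-\bar\alpha p)}]^{1-\bar\alpha p/q}+\max_{j\in J^c}(\delta_jt^{\alpha_j})^p\big)^{1/p}$ with $J=\{l:\alpha_lp<q\}$, $J^c=\{l:\alpha_lp\ge q\}$, $\bar\alpha=\min_{l\in J}\alpha_l$, empty sums/maxima $=0$; $\mathbf{1}$ in $\Psi^\alpha(\mathbf{1},\cdot)$ is the all-ones vector of $\mathbb{R}^{n_1}$. $|\cdot|$ entrywise absolute value, $\langle\cdot,\cdot\rangle$ Frobenius inner product. *)

From Stdlib Require Import Reals Lra ClassicalEpsilon.
Open Scope R_scope.

(* Indices are 0-based naturals: [N] = {0,...,N-1}. *)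
Fixpoint rsum (N : nat) (f : nat -> R) : R :=
  match N with O => 0 | S N' => rsum N' f + f N' end.

Fixpoint omax (N : nat) (P : nat -> bool) (f : nat -> R) : option R :=
  match N with
  | O => None
  | S N' => let r := omax N' P f in
      if P N' then match r with None => Some (f N') | Some m => Some (Rmax m (f N')) end
      else r
  end.

Fixpoint omin (N : nat) (P : nat -> bool) (f : nat -> R) : option R :=
  match N with
  | O => None
  | S N' => let r := omin N' P f in
      if P N' then match r with None => Some (f N') | Some m => Some (Rmin m (f N')) end
      else r
  end.

Definition odflt0 (o : option R) : R := match o with None => 0 | Some v => v end.

(* real power z^a for z >= 0, with 0^a = 0 (used only with a > 0) *)
Definition rpow (z a : R) : R := if Req_EM_T z 0 then 0 else Rpower z a.

Definition rsign (z : R) : R :=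
  if Rlt_dec 0 z then 1 else if Rlt_dec z 0 then -1 else 0.

Definition conj (p : R) : R := p / (p - 1).

Definition psi (p z : R) : R := rsign z * rpow (Rabs z) (p - 1).

Definition pnorm_vec (N : nat) (p : R) (v : nat -> R) : R :=
  rpow (rsum N (fun l => rpow (Rabs (v l)) p)) (/ p).
Definition pnorm_mat (N M : nat) (p : R) (v : nat -> nat -> R) : R :=
  rpow (rsum N (fun l => rsum M (fun m => rpow (Rabs (v l m)) p))) (/ p).

Definition Deriv (g : R -> R) (x : R) : R :=
  epsilon (inhabits 0) (fun l => derivable_pt_lim g x l).

Definition upd2 (w : nat -> nat -> R) (k l : nat) (t : R) : nat -> nat -> R :=
  fun r m => if andb (Nat.eqb r k) (Nat.eqb m l) then t else w r m.

Definition fr (n1 d : nat) (alpha : nat -> R) (w u : nat -> nat -> R) (r : nat)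
  (xi : nat -> R) : R :=
  rsum n1 (fun l => w r l * rpow (rsum d (fun m => u l m * xi m)) (alpha l)).

Definition lossL (K : nat) (yv : nat) (fv : nat -> R) : R :=
  - fv yv + ln (rsum K (fun j => exp (fv j))).

Definition Phi (n K n1 d : nat) (x : nat -> nat -> R) (y : nat -> nat)
  (alpha : nat -> R) (eps : R) (w u : nat -> nat -> R) : R :=
  / INR n * rsum n (fun i =>
      - lossL K (y i) (fun r => fr n1 d alpha w u r (x i))
      + rsum K (fun r => fr n1 d alpha w u r (x i)))
  + eps * (rsum K (fun r => rsum n1 (fun l => w r l))
           + rsum n1 (fun l => rsum d (fun m => u l m))).

Definition gradW (Ph : (nat -> nat -> R) -> (nat -> nat -> R) -> R)
  (r l : nat) (w u : nat -> nat -> R) : R :=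
  Deriv (fun t => Ph (upd2 w r l t) u) (w r l).
Definition gradU (Ph : (nat -> nat -> R) -> (nat -> nat -> R) -> R)
  (l m : nat) (w u : nat -> nat -> R) : R :=
  Deriv (fun t => Ph w (upd2 u l m t)) (u l m).

Definition GW (Ph : (nat -> nat -> R) -> (nat -> nat -> R) -> R) (n1 : nat)
  (pw rhow : R) (i j : nat) (w u : nat -> nat -> R) : R :=
  rhow * psi (conj pw) (gradW Ph i j w u)
  / pnorm_vec n1 pw (fun l => psi (conj pw) (gradW Ph i l w u)).
Definition GU (Ph : (nat -> nat -> R) -> (nat -> nat -> R) -> R) (n1 d : nat)
  (pu rhou : R) (a b : nat) (w u : nat -> nat -> R) : R :=
  rhou * psi (conj pu) (gradU Ph a b w u)
  / pnorm_mat n1 d pu (fun l m => psi (conj pu) (gradU Ph l m w u)).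

Definition inBpp (K n1 d : nat) (pw pu rhow rhou : R) (w u : nat -> nat -> R) : Prop :=
  (forall r l, (r < K)%nat -> (l < n1)%nat -> 0 < w r l) /\
  (forall l m, (l < n1)%nat -> (m < d)%nat -> 0 < u l m) /\
  pnorm_mat n1 d pu u <= rhou /\
  (forall r, (r < K)%nat -> pnorm_vec n1 pw (w r) <= rhow).

Definition inJ (alpha : nat -> R) (p q : R) (l : nat) : bool :=
  if Rlt_dec (alpha l * p) q then true else false.
Definition PsiA (n1 : nat) (alpha : nat -> R) (p q : R) (delta : nat -> R) (t : R) : R :=
  let J := inJ alpha p q in
  let Jc := fun l => negb (J l) in
  let term1 := match omin n1 J alpha with
               | None => 0
               | Some ab =>
                   rpow (rsum n1 (fun l => if J l then
                           rpow (delta l * rpow t (alpha l)) (p * q / (q - ab * p))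
                         else 0)) (1 - ab * p / q)
               end in
  let term2 := odflt0 (omax n1 Jc (fun j => rpow (delta j * rpow t (alpha j)) p)) in
  rpow (term1 + term2) (/ p).

Definition rho_x (n d : nat) (x : nat -> nat -> R) (pu : R) : R :=
  odflt0 (omax n (fun _ => true) (fun i => pnorm_vec d (conj pu) (x i))).

Definition ninf (n1 : nat) (alpha : nat -> R) : R :=
  odflt0 (omax n1 (fun _ => true) (fun l => Rabs (alpha l))).

(* A = 2 diag(pw'-1,...,pw'-1,pu'-1) M, indices 0..K (0-based; K = last) *)
Definition Mmat (K : nat) (Cw Cu ainf : R) (i k : nat) : R :=
  if Nat.ltb i K then
    (if Nat.ltb k K then 2 * Cw else 2 * Cu + ainf)
  else
    (if Nat.ltb k K then 2 * Cw + 1 else 2 * Cu + ainf - 1).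
Definition Amat (K : nat) (pw pu Cw Cu ainf : R) (i k : nat) : R :=
  2 * (if Nat.ltb i K then conj pw - 1 else conj pu - 1) * Mmat K Cw Cu ainf i k.

(* Each component of [G^Phi] is [rho psi(g_j) / ||psi(g)||_p] with [g] a partial derivative of [Phi],
   and every such partial is at least [eps > 0].  Along a coordinate [t], the logarithmic derivative
   of this normalised map is [(p' - 1) (g_j'/g_j - sum_ab pi_ab g_ab'/g_ab)] for probability weights
   [pi], so the coordinate-weighted derivatives are at most [2 (p' - 1) B] times the component as soon
   as every [g_ab'] weighted by the coordinates is at most [B g_ab].  Such bounds follow from the
   softmax Jacobian, whose [r]-th row has [l1]-norm at most [2 c_r] where [c_r >= 0] is the derivative
   of the sample term of [Phi] in [f_r], and from Hölder's inequality on [B_++], which bounds the outputs [f_r] by [C_w]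
   and [sum_l w_{r,l} alpha_l z_l^alpha_l] by [C_u]. *)

From Stdlib Require Import Reals Lra Lia ClassicalEpsilon Classical FunctionalExtensionality.
Open Scope R_scope.

(** * Finite sums and maxima *)

Lemma rsum_ext N f g : (forall i, (i < N)%nat -> f i = g i) -> rsum N f = rsum N g.
Proof.
  induction N; simpl; intros; auto. rewrite IHN by (intros; apply H; lia). rewrite H by lia; auto.
Qed.

Lemma rsum_le N f g : (forall i, (i < N)%nat -> f i <= g i) -> rsum N f <= rsum N g.
Proof.
  induction N; simpl; intros; [lra|]. specialize (IHN (fun i Hi => H i ltac:(lia))).
  specialize (H N ltac:(lia)). lra.
Qed.

Lemma rsum_zero N : rsum N (fun _ => 0) = 0.
Proof. induction N; simpl; auto; rewrite IHN; ring. Qed.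

Lemma rsum_nonneg N f : (forall i, (i < N)%nat -> 0 <= f i) -> 0 <= rsum N f.
Proof. intros. rewrite <- (rsum_zero N). apply rsum_le; auto. Qed.

Lemma rsum_plus N f g : rsum N (fun i => f i + g i) = rsum N f + rsum N g.
Proof. induction N; simpl; [ring|]. rewrite IHN; ring. Qed.

Lemma rsum_minus N f g : rsum N (fun i => f i - g i) = rsum N f - rsum N g.
Proof. induction N; simpl; [ring|]. rewrite IHN; ring. Qed.

Lemma rsum_scal N c f : rsum N (fun i => c * f i) = c * rsum N f.
Proof. induction N; simpl; [ring|]. rewrite IHN; ring. Qed.

Lemma rsum_scal_r N c f : rsum N (fun i => f i * c) = rsum N f * c.
Proof. induction N; simpl; [ring|]. rewrite IHN; ring. Qed.

Lemma rsum_abs N f : Rabs (rsum N f) <= rsum N (fun i => Rabs (f i)).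
Proof. induction N; simpl. rewrite Rabs_R0; lra.
  eapply Rle_trans. apply Rabs_triang. lra. Qed.

Lemma rsum_swap N M f : rsum N (fun i => rsum M (fun j => f i j)) = rsum M (fun j => rsum N (fun i => f i j)).
Proof.
  induction N; simpl. rewrite rsum_zero; auto.
  rewrite IHN. rewrite <- rsum_plus. reflexivity.
Qed.

Lemma rsum_delta N k v : (k < N)%nat -> rsum N (fun i => if Nat.eqb i k then v i else 0) = v k.
Proof.
  induction N; intros Hk; [lia|]. simpl.
  destruct (Nat.eq_dec k N).
  - subst. rewrite Nat.eqb_refl. rewrite (rsum_ext _ _ (fun _ => 0)). rewrite rsum_zero; ring.
    intros i Hi. destruct (Nat.eqb_spec i N); [lia|auto].
  - rewrite IHN by lia. destruct (Nat.eqb_spec N k); [lia|ring].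
Qed.

Lemma rsum_single_ge N f i : (i < N)%nat -> (forall j, (j < N)%nat -> 0 <= f j) -> f i <= rsum N f.
Proof.
  induction N; intros Hi Hf; [lia|]. simpl.
  destruct (Nat.eq_dec i N).
  - subst. assert (0 <= rsum N f) by (apply rsum_nonneg; intros; apply Hf; lia). lra.
  - assert (f i <= rsum N f) by (apply IHN; [lia| intros; apply Hf; lia]).
    specialize (Hf N ltac:(lia)). lra.
Qed.

Lemma rsum_pos N f i : (i < N)%nat -> (forall j, (j < N)%nat -> 0 <= f j) -> 0 < f i -> 0 < rsum N f.
Proof. intros. pose proof (rsum_single_ge N f i H H0). lra. Qed.

Lemma rsum_zero_each N f : (forall i, (i < N)%nat -> 0 <= f i) -> rsum N f = 0 -> forall i, (i < N)%nat -> f i = 0.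
Proof. intros H E i Hi. pose proof (rsum_single_ge N f i Hi H). specialize (H i Hi). lra. Qed.

Lemma rsum_one f : rsum 1 f = f 0%nat.
Proof. simpl; ring. Qed.

Lemma rsum2_le N M f g : (forall a b, (a < N)%nat -> (b < M)%nat -> f a b <= g a b) ->
  rsum N (fun a => rsum M (fun b => f a b)) <= rsum N (fun a => rsum M (fun b => g a b)).
Proof. intros. apply rsum_le; intros. apply rsum_le; intros. auto. Qed.

Lemma rsum2_scal N M c f : rsum N (fun a => rsum M (fun b => c * f a b)) = c * rsum N (fun a => rsum M (fun b => f a b)).
Proof. rewrite <- rsum_scal. apply rsum_ext; intros. apply rsum_scal. Qed.

Lemma rsum2_plus N M f g : rsum N (fun a => rsum M (fun b => f a b + g a b)) =
  rsum N (fun a => rsum M (fun b => f a b)) + rsum N (fun a => rsum M (fun b => g a b)).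
Proof. rewrite <- rsum_plus. apply rsum_ext; intros. apply rsum_plus. Qed.

Lemma rsum2_swap N M P Q (f : nat -> nat -> nat -> nat -> R) :
  rsum N (fun a => rsum M (fun b => rsum P (fun l => rsum Q (fun m => f a b l m)))) =
  rsum P (fun l => rsum Q (fun m => rsum N (fun a => rsum M (fun b => f a b l m)))).
Proof.
  transitivity (rsum N (fun a => rsum P (fun l => rsum Q (fun m => rsum M (fun b => f a b l m))))).
  { apply rsum_ext; intros a Ha. rewrite rsum_swap. apply rsum_ext; intros. apply rsum_swap. }
  rewrite rsum_swap. apply rsum_ext; intros l Hl. apply rsum_swap.
Qed.

Lemma rsum3_swap P Q K (f : nat -> nat -> nat -> R) :
  rsum P (fun l => rsum Q (fun m => rsum K (fun k => f l m k))) =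
  rsum K (fun k => rsum P (fun l => rsum Q (fun m => f l m k))).
Proof.
  rewrite (rsum_ext P _ (fun l => rsum K (fun k => rsum Q (fun m => f l m k)))).
  - apply rsum_swap.
  - intros; apply rsum_swap.
Qed.

Lemma rsum2_zero N M : rsum N (fun r => rsum M (fun m => 0)) = 0.
Proof. rewrite (rsum_ext N _ (fun _ => 0)). apply rsum_zero. intros; apply rsum_zero. Qed.

Lemma rsum_rsum1 P (f : nat -> nat -> R) : rsum P (fun l => rsum 1 (fun m => f l m)) = rsum P (fun l => f l 0%nat).
Proof. apply rsum_ext; intros; apply rsum_one. Qed.

Lemma rsum_rsum1_expand N f : rsum N f = rsum N (fun l => rsum 1 (fun _ => f l)).
Proof. apply rsum_ext; intros. rewrite rsum_one; reflexivity. Qed.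

Definition kron (r k : nat) : R := if Nat.eqb r k then 1 else 0.

Lemma kron_nonneg a b : 0 <= kron a b.
Proof. unfold kron; destruct (Nat.eqb a b); lra. Qed.

Lemma kron_sym a b : kron a b = kron b a.
Proof. unfold kron; rewrite Nat.eqb_sym; auto. Qed.

Lemma rsum_kron_l N k v : (k < N)%nat -> rsum N (fun i => kron i k * v i) = v k.
Proof.
  intros Hk. rewrite <- (rsum_delta N k v Hk). apply rsum_ext; intros. unfold kron.
  destruct (Nat.eqb i k); ring.
Qed.

Lemma rsum_kron_r N k v : (k < N)%nat -> rsum N (fun i => v i * kron i k) = v k.
Proof. intros. rewrite <- (rsum_kron_l N k v H). apply rsum_ext; intros; ring. Qed.

Lemma rsum2_kron N M k l : (k < N)%nat -> (l < M)%nat ->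
  rsum N (fun r => rsum M (fun m => kron r k * kron m l)) = 1.
Proof.
  intros. rewrite (rsum_ext N _ (fun r => kron r k * 1)).
  - rewrite rsum_kron_l; auto.
  - intros r Hr. rewrite rsum_scal. rewrite (rsum_ext M _ (fun m => 1 * kron m l)) by (intros; ring).
    rewrite rsum_kron_r; auto.
Qed.

Lemma omax_notnone N (P : nat -> bool) (f : nat -> R) l : (l < N)%nat -> P l = true -> omax N P f <> None.
Proof.
  induction N; intros Hl HP E; [lia|]. simpl in E.
  destruct (Nat.eq_dec l N).
  - subst. rewrite HP in E. destruct (omax N P f); discriminate.
  - destruct (P N); destruct (omax N P f) eqn:E2; try discriminate. apply (IHN ltac:(lia) HP); auto.
Qed.

Lemma omin_notnone N (P : nat -> bool) (f : nat -> R) l : (l < N)%nat -> P l = true -> omin N P f <> None.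
Proof.
  induction N; intros Hl HP E; [lia|]. simpl in E.
  destruct (Nat.eq_dec l N).
  - subst. rewrite HP in E. destruct (omin N P f); discriminate.
  - destruct (P N); destruct (omin N P f) eqn:E2; try discriminate. apply (IHN ltac:(lia) HP); auto.
Qed.

Lemma omax_ge_P N (P : nat -> bool) (f : nat -> R) l : (l < N)%nat -> P l = true -> f l <= odflt0 (omax N P f).
Proof.
  induction N; intros Hl HP; [lia|]. simpl.
  destruct (Nat.eq_dec l N).
  - subst. rewrite HP. destruct (omax N P f); simpl; [apply Rmax_r| lra].
  - specialize (IHN ltac:(lia) HP). pose proof (omax_notnone N P f l ltac:(lia) HP).
    destruct (P N); destruct (omax N P f) eqn:E; simpl in *; auto; try congruence.
    eapply Rle_trans; [apply IHN| apply Rmax_l].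
Qed.

Lemma omax_ge N (f : nat -> R) l : (l < N)%nat -> f l <= odflt0 (omax N (fun _ => true) f).
Proof. intros Hl. exact (omax_ge_P N (fun _ => true) f l Hl eq_refl). Qed.

Lemma omax_nonneg N P (f : nat -> R) : (forall l, 0 <= f l) -> 0 <= odflt0 (omax N P f).
Proof.
  intros Hf. induction N; simpl; [lra|].
  destruct (P N); destruct (omax N P f); simpl in *; auto.
  eapply Rle_trans; [apply IHN| apply Rmax_l].
Qed.

Lemma omin_some N P (f : nat -> R) m : omin N P f = Some m ->
  (forall l, (l < N)%nat -> P l = true -> m <= f l) /\ (exists l, (l < N)%nat /\ P l = true /\ f l = m).
Proof.
  revert m. induction N; intros m E; simpl in E; [discriminate|].
  destruct (P N) eqn:HPN; destruct (omin N P f) eqn:E2.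
  - inversion E; subst. destruct (IHN r eq_refl) as [H1 [l0 [Hl0 [HP0 Hf0]]]]. split.
    + intros l Hl HPl. destruct (Nat.eq_dec l N). subst; apply Rmin_r.
      eapply Rle_trans; [apply Rmin_l| apply H1; auto; lia].
    + destruct (Rle_dec r (f N)).
      * exists l0; split; [lia| split; [auto| rewrite Hf0, Rmin_left; auto]].
      * exists N; split; [lia| split; [auto| rewrite Rmin_right; auto; lra]].
  - inversion E; subst. split.
    + intros l Hl HPl. destruct (Nat.eq_dec l N). subst; lra.
      exfalso. apply (omin_notnone N P f l ltac:(lia) HPl); auto.
    + exists N; repeat split; auto.
  - destruct (IHN m E) as [H1 H2]. split.
    + intros l Hl HPl. destruct (Nat.eq_dec l N). subst; congruence. apply H1; auto; lia.
    + destruct H2 as [l0 [? [? ?]]]. exists l0; repeat split; auto.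
  - discriminate.
Qed.

Lemma omin_none N P (f : nat -> R) : omin N P f = None -> forall l, (l < N)%nat -> P l = false.
Proof.
  induction N; intros E l Hl; [lia|]. simpl in E.
  destruct (P N) eqn:HPN; destruct (omin N P f) eqn:E2; try discriminate.
  destruct (Nat.eq_dec l N). subst; auto. apply IHN; auto; lia.
Qed.

Lemma alpha_le_ninf n1 alpha l : (l < n1)%nat -> 1 <= alpha l -> alpha l <= ninf n1 alpha.
Proof.
  intros. unfold ninf. eapply Rle_trans; [|apply (omax_ge n1 (fun l => Rabs (alpha l)) l H)].
  rewrite Rabs_right by lra. lra.
Qed.

Lemma ninf_ge1 n1 alpha l : (l < n1)%nat -> 1 <= alpha l -> 1 <= ninf n1 alpha.
Proof. intros. pose proof (alpha_le_ninf n1 alpha l H H0). lra. Qed.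

(** * Derivatives *)

(* Closure rules for [derivable_pt_lim] stated on lambda-terms rather than on Stdlib's [(f + g)%F]. *)

Lemma Deriv_unique g x l : derivable_pt_lim g x l -> Deriv g x = l.
Proof.
  intro H. unfold Deriv.
  apply (uniqueness_limite g x).
  - apply (epsilon_spec (inhabits 0) (fun l => derivable_pt_lim g x l)). eauto.
  - exact H.
Qed.

Lemma dl_ext f g x l : (forall t, f t = g t) -> derivable_pt_lim f x l -> derivable_pt_lim g x l.
Proof. intros; eapply derivable_pt_lim_ext; eauto. Qed.

Lemma dl_eq_val f x l1 l2 : derivable_pt_lim f x l1 -> l1 = l2 -> derivable_pt_lim f x l2.
Proof. intros H E; subst; auto. Qed.

Lemma dl_local f g x l del : 0 < del -> (forall t, Rabs (t - x) < del -> f t = g t) ->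
  derivable_pt_lim f x l -> derivable_pt_lim g x l.
Proof.
  intros Hd Hfg Hf. apply (derivable_pt_lim_locally_ext f g x (x - del) (x + del)); auto.
  - lra.
  - intros z Hz. apply Hfg. apply Rabs_def1; lra.
Qed.

Lemma dl_const c x : derivable_pt_lim (fun _ => c) x 0.
Proof. apply derivable_pt_lim_const. Qed.

Lemma dl_id x : derivable_pt_lim (fun t => t) x 1.
Proof. apply derivable_pt_lim_id. Qed.

Lemma dl_plus f g x a b : derivable_pt_lim f x a -> derivable_pt_lim g x b ->
  derivable_pt_lim (fun t => f t + g t) x (a + b).
Proof. intros; apply (derivable_pt_lim_plus f g); auto. Qed.

Lemma dl_minus f g x a b : derivable_pt_lim f x a -> derivable_pt_lim g x b ->
  derivable_pt_lim (fun t => f t - g t) x (a - b).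
Proof. intros; apply (derivable_pt_lim_minus f g); auto. Qed.

Lemma dl_mult f g x a b : derivable_pt_lim f x a -> derivable_pt_lim g x b ->
  derivable_pt_lim (fun t => f t * g t) x (a * g x + f x * b).
Proof. intros; apply (derivable_pt_lim_mult f g); auto. Qed.

Lemma dl_scal c f x a : derivable_pt_lim f x a -> derivable_pt_lim (fun t => c * f t) x (c * a).
Proof.
  intros H. apply (dl_ext (fun t => (fun _ => c) t * f t)); [reflexivity|].
  replace (c * a) with (0 * f x + c * a) by ring. apply dl_mult; auto. apply dl_const.
Qed.

Lemma dl_comp f h x a b : derivable_pt_lim f x a -> derivable_pt_lim h (f x) b ->
  derivable_pt_lim (fun t => h (f t)) x (b * a).
Proof. intros; apply (derivable_pt_lim_comp f h); auto. Qed.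

Lemma dl_exp f x a : derivable_pt_lim f x a -> derivable_pt_lim (fun t => exp (f t)) x (exp (f x) * a).
Proof. intros; apply dl_comp; auto. apply derivable_pt_lim_exp. Qed.

Lemma dl_ln f x a : 0 < f x -> derivable_pt_lim f x a -> derivable_pt_lim (fun t => ln (f t)) x (/ f x * a).
Proof. intros; apply dl_comp; auto. apply derivable_pt_lim_ln; auto. Qed.

Lemma dl_div f g x a b : g x <> 0 -> derivable_pt_lim f x a -> derivable_pt_lim g x b ->
  derivable_pt_lim (fun t => f t / g t) x ((a * g x - b * f x) / (g x)^2).
Proof.
  intros Hn Hf Hg. apply (dl_ext (f / g)%F). { intro t; reflexivity. }
  replace ((g x)^2) with (Rsqr (g x)) by (unfold Rsqr; ring).
  apply derivable_pt_lim_div; auto.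
Qed.

Lemma dl_Rpower f x a c : 0 < f x -> derivable_pt_lim f x a ->
  derivable_pt_lim (fun t => Rpower (f t) c) x (c * Rpower (f x) (c - 1) * a).
Proof.
  intros Hp Hf. apply (dl_comp f (fun z => Rpower z c)); auto.
  apply derivable_pt_lim_power; auto.
Qed.

Lemma dl_rsum N (F : R -> nat -> R) (D : nat -> R) x :
  (forall i, (i < N)%nat -> derivable_pt_lim (fun t => F t i) x (D i)) ->
  derivable_pt_lim (fun t => rsum N (F t)) x (rsum N D).
Proof.
  induction N; intros H; simpl.
  - apply dl_const.
  - apply dl_plus. apply IHN; intros; apply H; lia. apply H; lia.
Qed.

Lemma dl_locally_pos f t0 a : derivable_pt_lim f t0 a -> 0 < f t0 ->
  exists del, 0 < del /\ forall t, Rabs (t - t0) < del -> 0 < f t.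
Proof.
  intros H Hp.
  pose proof (derivable_continuous_pt f t0 (exist _ a H)) as Hc.
  unfold continuity_pt, continue_in, limit1_in, limit_in in Hc.
  destruct (Hc (f t0 / 2) ltac:(lra)) as [alp [Halp Hf]].
  exists alp; split; auto. intros t Ht.
  destruct (Req_dec t t0). { subst; auto. }
  assert (Hd : R_dist (f t) (f t0) < f t0 / 2).
  { apply (Hf t). split. unfold D_x, no_cond; split; auto. simpl. unfold R_dist. auto. }
  unfold R_dist in Hd. apply Rabs_def2 in Hd. lra.
Qed.

(** * Real powers, Young and Hölder *)

Lemma Rpower_pos z a : 0 < Rpower z a.
Proof. unfold Rpower; apply exp_pos. Qed.

Lemma rpow_pos_eq z a : 0 < z -> rpow z a = Rpower z a.
Proof. intro H. unfold rpow. destruct (Req_EM_T z 0); [lra|auto]. Qed.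

Lemma rpow_nonneg z a : 0 <= rpow z a.
Proof. unfold rpow. destruct (Req_EM_T z 0); [lra|]. left; apply Rpower_pos. Qed.

Lemma rpow_0 a : rpow 0 a = 0.
Proof. unfold rpow. destruct (Req_EM_T 0 0); [auto|lra]. Qed.

Lemma Rpower_minus1 z c : 0 < z -> Rpower z (c - 1) = Rpower z c / z.
Proof.
  intro H. unfold Rminus. rewrite Rpower_plus, Rpower_Ropp, Rpower_1 by auto. unfold Rdiv; auto.
Qed.

Lemma exp_le x y : x <= y -> exp x <= exp y.
Proof. intros [H|H]; [left; apply exp_increasing; auto| subst; lra]. Qed.

Lemma ln_nonpos b : 0 < b -> b <= 1 -> ln b <= 0.
Proof. intros H1 [H2|H2]. left; rewrite <- ln_1; apply ln_increasing; auto. subst; rewrite ln_1; lra. Qed.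

Lemma ln_gt_0 b : 1 < b -> 0 < ln b.
Proof. intros. rewrite <- ln_1; apply ln_increasing; lra. Qed.

Lemma rpow_mult a b c : 0 <= a -> 0 <= b -> rpow (a * b) c = rpow a c * rpow b c.
Proof.
  intros [Ha|Ha] [Hb|Hb]; try (subst; rewrite ?Rmult_0_l, ?Rmult_0_r, !rpow_0; ring).
  rewrite !rpow_pos_eq by (try apply Rmult_lt_0_compat; auto). rewrite Rpower_mult_distr; auto.
Qed.

Lemma rpow_rpow a c1 c2 : 0 <= a -> rpow (rpow a c1) c2 = rpow a (c1 * c2).
Proof.
  intros [Ha|Ha]; [|subst; rewrite !rpow_0; auto].
  rewrite (rpow_pos_eq a c1) by auto. rewrite rpow_pos_eq by apply Rpower_pos.
  rewrite rpow_pos_eq by auto. apply Rpower_mult.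
Qed.

Lemma rpow_1 a : 0 <= a -> rpow a 1 = a.
Proof. intros [Ha|Ha]; [rewrite rpow_pos_eq, Rpower_1; auto| subst; apply rpow_0]. Qed.

Lemma rpow_inv_r a c : 0 <= a -> c <> 0 -> rpow (rpow a (/ c)) c = a.
Proof. intros. rewrite rpow_rpow by auto. rewrite Rinv_l by auto. apply rpow_1; auto. Qed.

Lemma rpow_le_base a b c : 0 <= a -> a <= b -> 0 <= c -> rpow a c <= rpow b c.
Proof.
  intros [Ha|Ha] Hab Hc.
  - rewrite !rpow_pos_eq by lra. apply Rle_Rpower_l; auto.
  - subst. rewrite rpow_0. apply rpow_nonneg.
Qed.

Lemma rpow_le_exp b c1 c2 : 0 <= b -> b <= 1 -> c1 <= c2 -> rpow b c2 <= rpow b c1.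
Proof.
  intros [Hb|Hb] Hb1 Hc; [|subst; rewrite !rpow_0; lra].
  rewrite !rpow_pos_eq by auto. unfold Rpower. apply exp_le.
  pose proof (ln_nonpos b Hb Hb1). nra.
Qed.

Lemma rpow_le1 b c : 0 <= b -> b <= 1 -> 0 <= c -> rpow b c <= 1.
Proof.
  intros [Hb|Hb] Hb1 Hc; [|subst; rewrite rpow_0; lra].
  rewrite rpow_pos_eq by auto. unfold Rpower. rewrite <- exp_0. apply exp_le.
  pose proof (ln_nonpos b Hb Hb1). nra.
Qed.

Lemma rpow_gt1 b c : 1 < b -> 0 < c -> 1 < rpow b c.
Proof.
  intros. rewrite rpow_pos_eq by lra. unfold Rpower. rewrite <- exp_0. apply exp_increasing.
  pose proof (ln_gt_0 b H). nra.
Qed.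

Lemma rpow_zero_iff a c : 0 <= a -> rpow a c = 0 -> a = 0.
Proof.
  intros [Ha|Ha] H; auto. rewrite rpow_pos_eq in H by auto. pose proof (Rpower_pos a c). lra.
Qed.

Lemma rpow_inv_base a c : 0 < a -> rpow (/ a) c = / rpow a c.
Proof.
  intros Ha. rewrite !rpow_pos_eq by (try apply Rinv_0_lt_compat; auto).
  unfold Rpower. rewrite ln_Rinv by auto. rewrite <- exp_Ropp. f_equal; ring.
Qed.

Lemma rpow_div_scale a al P : 0 <= a -> 0 < al -> rpow (a / al) P = rpow a P / rpow al P.
Proof.
  intros Ha Hal. unfold Rdiv. rewrite rpow_mult by (auto; left; apply Rinv_0_lt_compat; auto).
  rewrite rpow_inv_base; auto.
Qed.

Lemma dl_rpow f t0 a c : derivable_pt_lim f t0 a -> 0 < f t0 ->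
  derivable_pt_lim (fun t => rpow (f t) c) t0 (c * rpow (f t0) (c - 1) * a).
Proof.
  intros H Hp. destruct (dl_locally_pos f t0 a H Hp) as [del [Hdel Hpos]].
  rewrite rpow_pos_eq by auto.
  apply (dl_local (fun t => Rpower (f t) c) _ _ _ del); auto.
  - intros t Ht. rewrite rpow_pos_eq; auto.
  - apply dl_Rpower; auto.
Qed.

Lemma conj_gt1 p : 1 < p -> 1 < conj p.
Proof. intro H. unfold conj. apply (Rmult_lt_reg_r (p - 1)); [lra|]. field_simplify; lra. Qed.

Lemma conj_sub1_mul p : 1 < p -> (conj p - 1) * p = conj p.
Proof. intro H. unfold conj. field. lra. Qed.

Lemma exp_convex lam s t : 0 <= lam <= 1 ->
  exp (lam * s + (1 - lam) * t) <= lam * exp s + (1 - lam) * exp t.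
Proof.
  intros Hl. set (m := lam * s + (1 - lam) * t).
  assert (Hs : exp m * (1 + (s - m)) <= exp s).
  { replace (exp s) with (exp m * exp (s - m)) by (rewrite <- exp_plus; f_equal; ring).
    apply Rmult_le_compat_l; [left; apply exp_pos| apply exp_ineq1_le]. }
  assert (Ht : exp m * (1 + (t - m)) <= exp t).
  { replace (exp t) with (exp m * exp (t - m)) by (rewrite <- exp_plus; f_equal; ring).
    apply Rmult_le_compat_l; [left; apply exp_pos| apply exp_ineq1_le]. }
  assert (E : lam * (exp m * (1 + (s - m))) + (1 - lam) * (exp m * (1 + (t - m))) = exp m) by (unfold m; ring).
  destruct Hl. nra.
Qed.

Lemma young x y P : 0 <= x -> 0 <= y -> 1 < P ->
  x * y <= rpow x P / P + rpow y (conj P) / conj P.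
Proof.
  intros Hx Hy HP. assert (HQ := conj_gt1 P HP).
  assert (H0 : 0 <= rpow x P / P + rpow y (conj P) / conj P).
  { apply Rplus_le_le_0_compat; apply Rmult_le_pos; try apply rpow_nonneg; left; apply Rinv_0_lt_compat; lra. }
  destruct Hx as [Hx|Hx]; [|subst; lra]. destruct Hy as [Hy|Hy]; [|subst; lra].
  rewrite !rpow_pos_eq by auto. unfold Rpower.
  assert (Hl : / P + / conj P = 1) by (unfold conj; field; lra).
  pose proof (exp_convex (/ P) (P * ln x) (conj P * ln y)) as Hc.
  replace (1 - / P) with (/ conj P) in Hc by lra.
  replace (/ P * (P * ln x) + / conj P * (conj P * ln y)) with (ln x + ln y) in Hc by (field; lra).
  rewrite exp_plus, !exp_ln in Hc by auto.
  replace (exp (P * ln x) / P + exp (conj P * ln y) / conj P) with (/ P * exp (P * ln x) + / conj P * exp (conj P * ln y)) by (unfold Rdiv; ring).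
  apply Hc. split. left; apply Rinv_0_lt_compat; lra. rewrite <- (Rinv_1). apply Rinv_le_contravar; lra.
Qed.

Lemma rsum_mul_zero_of_pow_sum N P (a b : nat -> R) : (forall i, (i < N)%nat -> 0 <= a i) ->
  rsum N (fun i => rpow (a i) P) = 0 -> rsum N (fun i => a i * b i) = 0.
Proof.
  intros Ha H0. rewrite (rsum_ext N _ (fun _ => 0)), rsum_zero; auto.
  intros i Hi. assert (E := rsum_zero_each N (fun i => rpow (a i) P) (fun i _ => rpow_nonneg _ _) H0 i Hi).
  apply rpow_zero_iff in E; auto. simpl in E. rewrite E; ring.
Qed.

Lemma holder N P (a b : nat -> R) : 1 < P ->
  (forall i, (i < N)%nat -> 0 <= a i) -> (forall i, (i < N)%nat -> 0 <= b i) ->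
  rsum N (fun i => a i * b i) <=
  rpow (rsum N (fun i => rpow (a i) P)) (/ P) * rpow (rsum N (fun i => rpow (b i) (conj P))) (/ conj P).
Proof.
  intros HP Ha Hb. assert (HQ := conj_gt1 P HP). set (Q := conj P) in *.
  set (A := rsum N (fun i => rpow (a i) P)). set (B := rsum N (fun i => rpow (b i) Q)).
  assert (HA : 0 <= A) by (apply rsum_nonneg; intros; apply rpow_nonneg).
  assert (HB : 0 <= B) by (apply rsum_nonneg; intros; apply rpow_nonneg).
  assert (HR : 0 <= rpow A (/ P) * rpow B (/ Q)) by (apply Rmult_le_pos; apply rpow_nonneg).
  destruct HA as [HA|HA].
  2:{ rewrite (rsum_mul_zero_of_pow_sum N P a b); auto. }
  destruct HB as [HB|HB].
  2:{ rewrite (rsum_ext N _ (fun i => b i * a i)) by (intros; ring).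
      rewrite (rsum_mul_zero_of_pow_sum N Q b a); auto. }
  set (al := rpow A (/ P)). set (be := rpow B (/ Q)).
  assert (Hal : 0 < al) by (unfold al; rewrite rpow_pos_eq by auto; apply Rpower_pos).
  assert (Hbe : 0 < be) by (unfold be; rewrite rpow_pos_eq by auto; apply Rpower_pos).
  assert (HalP : rpow al P = A) by (unfold al; apply rpow_inv_r; lra).
  assert (HbeQ : rpow be Q = B) by (unfold be; apply rpow_inv_r; lra).
  assert (Hy : forall i, (i < N)%nat -> (a i / al) * (b i / be) <= rpow (a i) P / (A * P) + rpow (b i) Q / (B * Q)).
  { intros i Hi. eapply Rle_trans. apply (young (a i / al) (b i / be) P); auto.
    - apply Rmult_le_pos; auto. left; apply Rinv_0_lt_compat; auto.
    - apply Rmult_le_pos; auto. left; apply Rinv_0_lt_compat; auto.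
    - fold Q. rewrite !rpow_div_scale by auto. rewrite HalP, HbeQ. right; field. repeat split; lra. }
  assert (Hs : rsum N (fun i => (a i / al) * (b i / be)) <= 1).
  { eapply Rle_trans. apply rsum_le. exact Hy.
    rewrite rsum_plus. unfold Rdiv. rewrite !rsum_scal_r. fold A B.
    replace (A * / (A * P) + B * / (B * Q)) with (/ P + / Q) by (field; lra).
    unfold Q, conj. right; field. lra. }
  rewrite (rsum_ext N _ (fun i => (a i / al) * (b i / be) * (al * be))) by (intros; field; lra).
  rewrite rsum_scal_r. fold al be. assert (0 < al * be) by (apply Rmult_lt_0_compat; auto). nra.
Qed.

(** * The normalised map *)

Lemma psi_pos p g : 0 < g -> psi p g = Rpower g (p - 1).
Proof.
  intro H. unfold psi, rsign. destruct (Rlt_dec 0 g); [|lra].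
  rewrite Rabs_right by lra. rewrite rpow_pos_eq by auto. ring.
Qed.

Definition psi_sum (N M : nat) (c : R) (g : nat -> nat -> R) : R :=
  rsum N (fun a => rsum M (fun b => Rpower (g a b) c)).

Definition psi_weight (N M : nat) (c : R) (g : nat -> nat -> R) (a b : nat) : R :=
  Rpower (g a b) c / psi_sum N M c g.

Lemma psi_sum_pos N M c g j1 j2 : (j1 < N)%nat -> (j2 < M)%nat -> 0 < psi_sum N M c g.
Proof.
  intros. unfold psi_sum. apply (rsum_pos _ _ j1); auto.
  - intros; apply rsum_nonneg; intros; left; apply Rpower_pos.
  - apply (rsum_pos _ _ j2); auto. intros; left; apply Rpower_pos. apply Rpower_pos.
Qed.

Lemma psi_weight_sum N M c g j1 j2 : (j1 < N)%nat -> (j2 < M)%nat ->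
  rsum N (fun a => rsum M (fun b => psi_weight N M c g a b)) = 1.
Proof.
  intros. unfold psi_weight. pose proof (psi_sum_pos N M c g j1 j2 H H0).
  transitivity (rsum N (fun a => rsum M (fun b => Rpower (g a b) c)) / psi_sum N M c g).
  - unfold Rdiv. rewrite <- rsum_scal_r. apply rsum_ext; intros. rewrite <- rsum_scal_r. auto.
  - fold (psi_sum N M c g). field. lra.
Qed.

Lemma psi_weight_nonneg N M c g a b : (exists j1 j2, (j1 < N)%nat /\ (j2 < M)%nat) -> 0 <= psi_weight N M c g a b.
Proof.
  intros [j1 [j2 [H1 H2]]]. unfold psi_weight. pose proof (psi_sum_pos N M c g j1 j2 H1 H2).
  pose proof (Rpower_pos (g a b) c). unfold Rdiv; apply Rmult_le_pos; [lra|left; apply Rinv_0_lt_compat; lra].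
Qed.

Lemma pnorm_mat_psi N M p (g : nat -> nat -> R) j1 j2 : 1 < p -> (j1 < N)%nat -> (j2 < M)%nat ->
  (forall a b, (a < N)%nat -> (b < M)%nat -> 0 < g a b) ->
  pnorm_mat N M p (fun a b => psi (conj p) (g a b)) = Rpower (psi_sum N M (conj p) g) (/ p).
Proof.
  intros Hp H1 H2 Hg. unfold pnorm_mat.
  replace (rsum N (fun l => rsum M (fun m => rpow (Rabs (psi (conj p) (g l m))) p)))
    with (psi_sum N M (conj p) g).
  - apply rpow_pos_eq. apply (psi_sum_pos _ _ _ _ j1 j2); auto.
  - unfold psi_sum. apply rsum_ext; intros. apply rsum_ext; intros.
    rewrite psi_pos by auto. rewrite Rabs_right by (left; apply Rpower_pos).
    rewrite rpow_pos_eq by apply Rpower_pos. rewrite Rpower_mult. rewrite conj_sub1_mul; auto.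
Qed.

Lemma dl_psi_sum N M c (G : R -> nat -> nat -> R) (dG : nat -> nat -> R) t0 j1 j2 :
  (j1 < N)%nat -> (j2 < M)%nat ->
  (forall a b, (a < N)%nat -> (b < M)%nat -> 0 < G t0 a b) ->
  (forall a b, (a < N)%nat -> (b < M)%nat -> derivable_pt_lim (fun t => G t a b) t0 (dG a b)) ->
  derivable_pt_lim (fun t => psi_sum N M c (G t)) t0
    (c * psi_sum N M c (G t0) *
     rsum N (fun a => rsum M (fun b => psi_weight N M c (G t0) a b * (dG a b / G t0 a b)))).
Proof.
  intros H1 H2 Hpos Hd. eapply dl_eq_val.
  { unfold psi_sum. apply dl_rsum; intros a Ha. apply dl_rsum; intros b Hb.
    apply dl_Rpower; auto. }
  assert (HS := psi_sum_pos N M c (G t0) j1 j2 H1 H2).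
  rewrite <- rsum_scal. apply rsum_ext; intros a Ha. rewrite <- rsum_scal.
  apply rsum_ext; intros b Hb. unfold psi_weight. rewrite Rpower_minus1 by auto.
  field. split; [specialize (Hpos a b Ha Hb)|]; lra.
Qed.

Lemma dl_normalized_psi N M p rho (G : R -> nat -> nat -> R) (dG : nat -> nat -> R) t0 j1 j2 :
  1 < p -> 0 < t0 -> (j1 < N)%nat -> (j2 < M)%nat ->
  (forall t, 0 < t -> forall a b, (a < N)%nat -> (b < M)%nat -> 0 < G t a b) ->
  (forall a b, (a < N)%nat -> (b < M)%nat -> derivable_pt_lim (fun t => G t a b) t0 (dG a b)) ->
  derivable_pt_lim
    (fun t => rho * psi (conj p) (G t j1 j2) / pnorm_mat N M p (fun a b => psi (conj p) (G t a b))) t0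
    (rho * psi (conj p) (G t0 j1 j2) / pnorm_mat N M p (fun a b => psi (conj p) (G t0 a b))
      * (conj p - 1) * (dG j1 j2 / G t0 j1 j2
         - rsum N (fun a => rsum M (fun b => psi_weight N M (conj p) (G t0) a b * (dG a b / G t0 a b))))).
Proof.
  intros Hp Ht0 H1 H2 Hpos Hd.
  set (c := conj p). set (e := c - 1).
  assert (Hce : e * p = c) by (unfold e, c; apply conj_sub1_mul; auto).
  apply (dl_local (fun t => rho * Rpower (G t j1 j2) e / Rpower (psi_sum N M c (G t)) (/ p))
           _ _ _ t0); auto.
  { intros t Ht. assert (0 < t) by (apply Rabs_def2 in Ht; lra).
    rewrite pnorm_mat_psi with (j1 := j1) (j2 := j2), psi_pos by auto. reflexivity. }
  assert (HG0 : 0 < G t0 j1 j2) by auto.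
  assert (HS0 : 0 < psi_sum N M c (G t0)) by (apply (psi_sum_pos _ _ _ _ j1 j2); auto).
  set (Y := rsum N (fun a => rsum M (fun b => psi_weight N M c (G t0) a b * (dG a b / G t0 a b)))).
  eapply dl_eq_val.
  { apply (dl_div (fun t => rho * Rpower (G t j1 j2) e) (fun t => Rpower (psi_sum N M c (G t)) (/p))).
    - pose proof (Rpower_pos (psi_sum N M c (G t0)) (/p)). lra.
    - apply dl_scal, dl_Rpower; auto.
    - apply dl_Rpower; auto. apply (dl_psi_sum N M c G dG t0 j1 j2); auto. }
  rewrite pnorm_mat_psi with (j1 := j1) (j2 := j2), psi_pos by auto. fold c e Y.
  rewrite !Rpower_minus1 by auto.
  pose proof (Rpower_pos (psi_sum N M c (G t0)) (/p)).
  set (S := psi_sum N M c (G t0)) in *. rewrite <- Hce.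
  field. repeat split; lra.
Qed.

Lemma abs_sub_mean_le X N M (pi Z : nat -> nat -> R) :
  (forall a b, 0 <= pi a b) ->
  Rabs (X - rsum N (fun a => rsum M (fun b => pi a b * Z a b)))
  <= Rabs X + rsum N (fun a => rsum M (fun b => pi a b * Rabs (Z a b))).
Proof.
  intros Hpi. eapply Rle_trans; [apply Rabs_triang|]. rewrite Rabs_Ropp. apply Rplus_le_compat_l.
  eapply Rle_trans; [apply rsum_abs|]. apply rsum_le; intros a Ha.
  eapply Rle_trans; [apply rsum_abs|]. apply rsum_le; intros b Hb.
  rewrite Rabs_mult, (Rabs_right (pi a b)) by (apply Rle_ge; auto). lra.
Qed.

(* The deviation of one relative derivative from their [psi_weight]-mean costs at most twice the
   bound on a single one. *)
Lemma normalized_psi_deriv_bound N M P Q c (g : nat -> nat -> R) (dGp : nat -> nat -> nat -> nat -> R)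
  (v : nat -> nat -> R) j1 j2 e F0 B :
  0 <= e -> 0 <= F0 -> 0 <= B -> (j1 < N)%nat -> (j2 < M)%nat ->
  (forall a b, (a < N)%nat -> (b < M)%nat -> 0 < g a b) ->
  (forall l m, (l < P)%nat -> (m < Q)%nat -> 0 <= v l m) ->
  (forall a b, (a < N)%nat -> (b < M)%nat ->
     rsum P (fun l => rsum Q (fun m => v l m * Rabs (dGp l m a b))) <= B * g a b) ->
  rsum P (fun l => rsum Q (fun m =>
    Rabs (F0 * e * (dGp l m j1 j2 / g j1 j2
       - rsum N (fun a => rsum M (fun b => psi_weight N M c g a b * (dGp l m a b / g a b))))) * v l m))
  <= 2 * e * B * F0.
Proof.
  intros He HF HB H1 H2 Hg Hv Hbd.
  set (pi := psi_weight N M c g).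
  assert (Hpi : forall a b, 0 <= pi a b) by (intros; apply psi_weight_nonneg; eauto).
  assert (Hrel : forall l m a b, (a < N)%nat -> (b < M)%nat ->
            Rabs (dGp l m a b / g a b) * v l m = / g a b * (v l m * Rabs (dGp l m a b))).
  { intros l m a b Ha Hb. unfold Rdiv.
    rewrite Rabs_mult, Rabs_inv, (Rabs_right (g a b)) by (apply Rle_ge; left; auto). ring. }
  eapply Rle_trans.
  { apply (rsum2_le P Q _ (fun l m => F0 * e * (/ g j1 j2 * (v l m * Rabs (dGp l m j1 j2))
        + rsum N (fun a => rsum M (fun b => pi a b * / g a b * (v l m * Rabs (dGp l m a b))))))).
    intros l m Hl Hm.
    rewrite Rabs_mult, (Rabs_right (F0 * e)), Rmult_assoc by (apply Rle_ge, Rmult_le_pos; auto).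
    apply Rmult_le_compat_l; [apply Rmult_le_pos; auto|].
    eapply Rle_trans; [apply Rmult_le_compat_r; [apply Hv; auto| apply abs_sub_mean_le; auto]|].
    rewrite Rmult_plus_distr_r, Hrel by auto. apply Rplus_le_compat_l.
    rewrite <- rsum_scal_r. apply rsum_le; intros a Ha.
    rewrite <- rsum_scal_r. apply rsum_le; intros b Hb.
    rewrite Rmult_assoc, Hrel by auto. right; ring. }
  rewrite (rsum2_scal P Q (F0 * e)), rsum2_plus, rsum2_scal.
  rewrite (rsum2_swap P Q N M (fun l m a b => pi a b * / g a b * (v l m * Rabs (dGp l m a b)))).
  replace (2 * e * B * F0) with (F0 * e * (B + B * 1)) by ring.
  apply Rmult_le_compat_l; [apply Rmult_le_pos; auto|].
  apply Rplus_le_compat.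
  - pose proof (Hbd j1 j2 H1 H2). pose proof (Hg j1 j2 H1 H2).
    apply (Rmult_le_reg_l (g j1 j2)); auto. rewrite <- Rmult_assoc, Rinv_r by lra. lra.
  - rewrite <- (psi_weight_sum N M c g j1 j2), <- rsum2_scal by auto.
    apply rsum2_le; intros a b Ha Hb. rewrite rsum2_scal.
    pose proof (Hbd a b Ha Hb). pose proof (Hg a b Ha Hb). specialize (Hpi a b).
    fold pi. replace (B * pi a b) with ((pi a b * / g a b) * (B * g a b)) by (field; lra).
    apply Rmult_le_compat_l; auto. apply Rmult_le_pos; auto. left; apply Rinv_0_lt_compat; auto.
Qed.

(* Coordinate [(l, m)] of the parameters moves along [t] from [t0p l m]; [Gp l m t] is the resulting
   gradient, equal to [g] at [t0p l m], and [Fexp l m t] the normalised component, which only needs to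
   be known for [t > 0], where the parameters stay positive. *)
Lemma Deriv_normalized_psi_bound N M P Q p rho (Gp : nat -> nat -> R -> nat -> nat -> R) (dGp : nat -> nat -> nat -> nat -> R)
  (t0p : nat -> nat -> R) (g : nat -> nat -> R) (v : nat -> nat -> R) (Fexp : nat -> nat -> R -> R) j1 j2 B :
  1 < p -> 0 < rho -> 0 <= B -> (j1 < N)%nat -> (j2 < M)%nat ->
  (forall a b, (a < N)%nat -> (b < M)%nat -> 0 < g a b) ->
  (forall l m, (l < P)%nat -> (m < Q)%nat -> 0 < t0p l m) ->
  (forall l m, (l < P)%nat -> (m < Q)%nat -> forall t, 0 < t -> forall a b, (a < N)%nat -> (b < M)%nat -> 0 < Gp l m t a b) ->
  (forall l m, (l < P)%nat -> (m < Q)%nat -> forall a b, (a < N)%nat -> (b < M)%nat ->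
       derivable_pt_lim (fun t => Gp l m t a b) (t0p l m) (dGp l m a b)) ->
  (forall l m, (l < P)%nat -> (m < Q)%nat -> Gp l m (t0p l m) = g) ->
  (forall l m, (l < P)%nat -> (m < Q)%nat -> forall t, 0 < t ->
       Fexp l m t = rho * psi (conj p) (Gp l m t j1 j2) / pnorm_mat N M p (fun a b => psi (conj p) (Gp l m t a b))) ->
  (forall l m, (l < P)%nat -> (m < Q)%nat -> 0 <= v l m) ->
  (forall a b, (a < N)%nat -> (b < M)%nat ->
     rsum P (fun l => rsum Q (fun m => v l m * Rabs (dGp l m a b))) <= B * g a b) ->
  rsum P (fun l => rsum Q (fun m => Rabs (Deriv (Fexp l m) (t0p l m)) * v l m))
   <= 2 * (conj p - 1) * B * (rho * psi (conj p) (g j1 j2) / pnorm_mat N M p (fun a b => psi (conj p) (g a b))).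
Proof.
  intros Hp Hrho HB H1 H2 Hgpos Ht0 HGpos Hder Hg HF Hv Hbd.
  assert (Hc1 := conj_gt1 p Hp).
  set (F0 := rho * psi (conj p) (g j1 j2) / pnorm_mat N M p (fun a b => psi (conj p) (g a b))).
  assert (HF0 : 0 <= F0).
  { unfold F0. rewrite psi_pos by auto. rewrite pnorm_mat_psi with (j1 := j1) (j2 := j2) by auto.
    left. apply Rdiv_lt_0_compat; [apply Rmult_lt_0_compat; auto; apply Rpower_pos| apply Rpower_pos]. }
  rewrite (rsum2_le P Q _ (fun l m => Rabs (F0 * (conj p - 1) * (dGp l m j1 j2 / g j1 j2
       - rsum N (fun a => rsum M (fun b => psi_weight N M (conj p) g a b * (dGp l m a b / g a b))))) * v l m)).
  - apply normalized_psi_deriv_bound; auto. lra.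
  - intros l m Hl Hm. right. f_equal. f_equal. apply Deriv_unique.
    apply (dl_local (fun t => rho * psi (conj p) (Gp l m t j1 j2) / pnorm_mat N M p (fun a b => psi (conj p) (Gp l m t a b))) _ _ _ (t0p l m)).
    + apply Ht0; auto.
    + intros t Ht. assert (0 < t) by (apply Rabs_def2 in Ht; lra). rewrite HF; auto.
    + pose proof (dl_normalized_psi N M p rho (Gp l m) (dGp l m) (t0p l m) j1 j2 Hp (Ht0 l m Hl Hm) H1 H2
         (HGpos l m Hl Hm) (Hder l m Hl Hm)) as ND.
      rewrite (Hg l m Hl Hm) in ND. exact ND.
Qed.

Lemma pnorm_vec_mat N p (v : nat -> R) : pnorm_vec N p v = pnorm_mat N 1 p (fun a _ => v a).
Proof. unfold pnorm_vec, pnorm_mat. f_equal. apply rsum_ext; intros. rewrite rsum_one; auto. Qed.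

Lemma pnorm_mat_ext N M p (v v' : nat -> nat -> R) : (forall a b, (a < N)%nat -> (b < M)%nat -> v a b = v' a b) ->
  pnorm_mat N M p v = pnorm_mat N M p v'.
Proof. intros. unfold pnorm_mat. f_equal. apply rsum_ext; intros. apply rsum_ext; intros. rewrite H; auto. Qed.

(** * The network and its derivatives *)

Lemma upd2_same (w : nat -> nat -> R) k l : upd2 w k l (w k l) = w.
Proof.
  apply functional_extensionality; intro r; apply functional_extensionality; intro m.
  unfold upd2. destruct (Nat.eqb_spec r k), (Nat.eqb_spec m l); simpl; subst; auto.
Qed.

Lemma dl_upd2 (w : nat -> nat -> R) k l r m t0 :
  derivable_pt_lim (fun t => upd2 w k l t r m) t0 (kron r k * kron m l).
Proof.
  unfold upd2, kron. destruct (Nat.eqb r k), (Nat.eqb m l); simpl.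
  - replace (1*1) with 1 by ring. apply dl_id.
  - replace (1*0) with 0 by ring. apply dl_const.
  - replace (0*1) with 0 by ring. apply dl_const.
  - replace (0*0) with 0 by ring. apply dl_const.
Qed.

Definition posU n1 d (u : nat -> nat -> R) := forall l m, (l < n1)%nat -> (m < d)%nat -> 0 < u l m.

Definition posW K n1 (w : nat -> nat -> R) := forall r l, (r < K)%nat -> (l < n1)%nat -> 0 < w r l.

Lemma posU_upd2 n1 d u l m t : posU n1 d u -> 0 < t -> posU n1 d (upd2 u l m t).
Proof. intros Hu Ht a b Ha Hb. unfold upd2. destruct (Nat.eqb a l && Nat.eqb b m)%bool; auto. Qed.

Lemma posW_upd2 K n1 w k l t : posW K n1 w -> 0 < t -> posW K n1 (upd2 w k l t).
Proof. intros Hw Ht a b Ha Hb. unfold upd2. destruct (Nat.eqb a k && Nat.eqb b l)%bool; auto. Qed.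

Definition data_ok (n K n1 d : nat) (x : nat -> nat -> R) (y : nat -> nat) (alpha : nat -> R) : Prop :=
  (0 < n)%nat /\ (forall i m, (i < n)%nat -> (m < d)%nat -> 0 <= x i m) /\
  (forall i, (i < n)%nat -> (y i < K)%nat) /\ (forall l, (l < n1)%nat -> 1 <= alpha l).

Definition preact (d : nat) (u : nat -> nat -> R) (xi : nat -> R) (l : nat) : R :=
  rsum d (fun m => u l m * xi m).

Definition act (d : nat) (alpha : nat -> R) u xi l : R := rpow (preact d u xi l) (alpha l).

Definition act1 (d : nat) (alpha : nat -> R) u xi l : R := alpha l * rpow (preact d u xi l) (alpha l - 1).

Definition act2 (d : nat) (alpha : nat -> R) u xi l : R :=
  alpha l * ((alpha l - 1) * rpow (preact d u xi l) (alpha l - 1 - 1)).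

Definition softmax_den K n1 d alpha w u xi : R := rsum K (fun r => exp (fr n1 d alpha w u r xi)).

Definition softmax K n1 d alpha w u xi r : R := exp (fr n1 d alpha w u r xi) / softmax_den K n1 d alpha w u xi.

(* The derivative of [- L(y, f) + sum_r f_r] with respect to [f_r]. *)
Definition out_coef K n1 d alpha w u xi (yv : nat) r : R := kron r yv - softmax K n1 d alpha w u xi r + 1.

Lemma fr_eq n1 d alpha w u r xi : fr n1 d alpha w u r xi = rsum n1 (fun l => w r l * act d alpha u xi l).
Proof. reflexivity. Qed.

(* Directional derivatives along a perturbation [(dW, dU)] of [(w, u)]. *)
Definition preact_dir d (dU : nat -> nat -> R) (xi : nat -> R) l := rsum d (fun m => dU l m * xi m).

Definition act_dir d alpha u dU xi l := act1 d alpha u xi l * preact_dir d dU xi l.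

Definition act1_dir d alpha u dU xi l := act2 d alpha u xi l * preact_dir d dU xi l.

Definition fr_dir n1 d alpha (w u dW dU : nat -> nat -> R) xi r :=
  rsum n1 (fun l => dW r l * act d alpha u xi l + w r l * act_dir d alpha u dU xi l).

Definition out_coef_dir K n1 d alpha w u dW dU xi r :=
  - (softmax K n1 d alpha w u xi r * (fr_dir n1 d alpha w u dW dU xi r
       - rsum K (fun k => softmax K n1 d alpha w u xi k * fr_dir n1 d alpha w u dW dU xi k))).

(* [rpow z a] is differentiable in [z] only for [z > 0]; a null input keeps the pre-activation at 0. *)
Definition preact_regular d (u : nat -> nat -> R) (xi : nat -> R) l := 0 < preact d u xi l \/ (forall m, (m < d)%nat -> xi m = 0).

Lemma dl_preact d (U : R -> nat -> nat -> R) dU xi l t0 :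
  (forall m, (m < d)%nat -> derivable_pt_lim (fun t => U t l m) t0 (dU l m)) ->
  derivable_pt_lim (fun t => preact d (U t) xi l) t0 (preact_dir d dU xi l).
Proof.
  intros H. unfold preact, preact_dir. apply (dl_rsum d (fun t m => U t l m * xi m)). intros m Hm.
  apply (dl_ext (fun t => U t l m * (fun _ => xi m) t)); [reflexivity|].
  replace (dU l m * xi m) with (dU l m * xi m + U t0 l m * 0) by ring.
  apply dl_mult; auto. apply dl_const.
Qed.

Lemma preact_dir_null d dU xi l : (forall m, (m < d)%nat -> xi m = 0) -> preact_dir d dU xi l = 0.
Proof. intros H. unfold preact_dir. rewrite (rsum_ext _ _ (fun _ => 0)). apply rsum_zero. intros; rewrite H; auto; ring. Qed.

Lemma preact_null d u xi l : (forall m, (m < d)%nat -> xi m = 0) -> preact d u xi l = 0.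
Proof. intros H. unfold preact. rewrite (rsum_ext _ _ (fun _ => 0)). apply rsum_zero. intros; rewrite H; auto; ring. Qed.

Lemma dl_rpow_preact d (U : R -> nat -> nat -> R) dU xi l t0 c :
  (forall m, (m < d)%nat -> derivable_pt_lim (fun t => U t l m) t0 (dU l m)) ->
  preact_regular d (U t0) xi l ->
  derivable_pt_lim (fun t => rpow (preact d (U t) xi l) c) t0
    (c * rpow (preact d (U t0) xi l) (c - 1) * preact_dir d dU xi l).
Proof.
  intros H [Hz | Hz].
  - apply dl_rpow; auto. apply dl_preact; auto.
  - rewrite (preact_dir_null d dU xi l Hz). replace (c * rpow (preact d (U t0) xi l) (c - 1) * 0) with 0 by ring.
    apply (dl_ext (fun _ => rpow 0 c)). { intro t. rewrite preact_null; auto. } apply dl_const.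
Qed.

Lemma dl_act d alpha (U : R -> nat -> nat -> R) dU xi l t0 :
  (forall m, (m < d)%nat -> derivable_pt_lim (fun t => U t l m) t0 (dU l m)) ->
  preact_regular d (U t0) xi l ->
  derivable_pt_lim (fun t => act d alpha (U t) xi l) t0 (act_dir d alpha (U t0) dU xi l).
Proof. intros. unfold act, act_dir, act1. apply dl_rpow_preact; auto. Qed.

Lemma dl_act1 d alpha (U : R -> nat -> nat -> R) dU xi l t0 :
  (forall m, (m < d)%nat -> derivable_pt_lim (fun t => U t l m) t0 (dU l m)) ->
  preact_regular d (U t0) xi l ->
  derivable_pt_lim (fun t => act1 d alpha (U t) xi l) t0 (act1_dir d alpha (U t0) dU xi l).
Proof.
  intros. unfold act1, act1_dir, act2. rewrite !Rmult_assoc. apply dl_scal.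
  rewrite <- Rmult_assoc. apply dl_rpow_preact; auto.
Qed.

Lemma dl_fr n1 d alpha (W U : R -> nat -> nat -> R) dW dU xi r t0 :
  (forall l, (l < n1)%nat -> derivable_pt_lim (fun t => W t r l) t0 (dW r l)) ->
  (forall l m, (l < n1)%nat -> (m < d)%nat -> derivable_pt_lim (fun t => U t l m) t0 (dU l m)) ->
  (forall l, (l < n1)%nat -> preact_regular d (U t0) xi l) ->
  derivable_pt_lim (fun t => fr n1 d alpha (W t) (U t) r xi) t0 (fr_dir n1 d alpha (W t0) (U t0) dW dU xi r).
Proof.
  intros HW HU Hz. unfold fr_dir.
  apply (dl_ext (fun t => rsum n1 ((fun t l => W t r l * act d alpha (U t) xi l) t))); [reflexivity|].
  apply dl_rsum. intros l Hl.
  apply (dl_ext (fun t => (fun t => W t r l) t * (fun t => act d alpha (U t) xi l) t)); [reflexivity|].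
  apply dl_mult; auto. apply dl_act; auto.
Qed.

Lemma dl_softmax_den K n1 d alpha (W U : R -> nat -> nat -> R) dW dU xi t0 :
  (forall r l, (r < K)%nat -> (l < n1)%nat -> derivable_pt_lim (fun t => W t r l) t0 (dW r l)) ->
  (forall l m, (l < n1)%nat -> (m < d)%nat -> derivable_pt_lim (fun t => U t l m) t0 (dU l m)) ->
  (forall l, (l < n1)%nat -> preact_regular d (U t0) xi l) ->
  derivable_pt_lim (fun t => softmax_den K n1 d alpha (W t) (U t) xi) t0
    (rsum K (fun r => exp (fr n1 d alpha (W t0) (U t0) r xi) * fr_dir n1 d alpha (W t0) (U t0) dW dU xi r)).
Proof.
  intros HW HU Hz. unfold softmax_den.
  apply (dl_ext (fun t => rsum K ((fun t r => exp (fr n1 d alpha (W t) (U t) r xi)) t))); [reflexivity|].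
  apply dl_rsum. intros r Hr. apply (dl_exp (fun t => fr n1 d alpha (W t) (U t) r xi)).
  apply dl_fr; auto.
Qed.

Lemma softmax_den_pos K n1 d alpha w u xi : (0 < K)%nat -> 0 < softmax_den K n1 d alpha w u xi.
Proof. intros. unfold softmax_den. apply (rsum_pos _ _ 0); auto. intros; left; apply exp_pos. apply exp_pos. Qed.

Lemma dl_softmax K n1 d alpha (W U : R -> nat -> nat -> R) dW dU xi r t0 : (r < K)%nat ->
  (forall r l, (r < K)%nat -> (l < n1)%nat -> derivable_pt_lim (fun t => W t r l) t0 (dW r l)) ->
  (forall l m, (l < n1)%nat -> (m < d)%nat -> derivable_pt_lim (fun t => U t l m) t0 (dU l m)) ->
  (forall l, (l < n1)%nat -> preact_regular d (U t0) xi l) ->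
  derivable_pt_lim (fun t => softmax K n1 d alpha (W t) (U t) xi r) t0
    (softmax K n1 d alpha (W t0) (U t0) xi r * (fr_dir n1 d alpha (W t0) (U t0) dW dU xi r
       - rsum K (fun k => softmax K n1 d alpha (W t0) (U t0) xi k * fr_dir n1 d alpha (W t0) (U t0) dW dU xi k))).
Proof.
  intros Hr HW HU Hz. unfold softmax.
  assert (HS := softmax_den_pos K n1 d alpha (W t0) (U t0) xi ltac:(lia)).
  eapply dl_eq_val.
  { apply (dl_div (fun t => exp (fr n1 d alpha (W t) (U t) r xi))
                  (fun t => softmax_den K n1 d alpha (W t) (U t) xi)).
    - lra.
    - apply (dl_exp (fun t => fr n1 d alpha (W t) (U t) r xi)). apply dl_fr; auto.
    - apply dl_softmax_den; auto. }
  set (S := softmax_den K n1 d alpha (W t0) (U t0) xi) in *.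
  set (fd := fr_dir n1 d alpha (W t0) (U t0) dW dU xi).
  unfold Rdiv.
  rewrite (rsum_ext K (fun k => exp (fr n1 d alpha (W t0) (U t0) k xi) * / S * fd k)
                      (fun k => / S * (exp (fr n1 d alpha (W t0) (U t0) k xi) * fd k)))
    by (intros; ring).
  rewrite rsum_scal. field. lra.
Qed.

Lemma dl_out_coef K n1 d alpha (W U : R -> nat -> nat -> R) dW dU xi yv r t0 : (r < K)%nat ->
  (forall r l, (r < K)%nat -> (l < n1)%nat -> derivable_pt_lim (fun t => W t r l) t0 (dW r l)) ->
  (forall l m, (l < n1)%nat -> (m < d)%nat -> derivable_pt_lim (fun t => U t l m) t0 (dU l m)) ->
  (forall l, (l < n1)%nat -> preact_regular d (U t0) xi l) ->
  derivable_pt_lim (fun t => out_coef K n1 d alpha (W t) (U t) xi yv r) t0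
    (out_coef_dir K n1 d alpha (W t0) (U t0) dW dU xi r).
Proof.
  intros. unfold out_coef, out_coef_dir.
  apply (dl_ext (fun t => ((fun _ => kron r yv) t - (fun t => softmax K n1 d alpha (W t) (U t) xi r) t) + (fun _ => 1) t)); [reflexivity|].
  replace (- (softmax K n1 d alpha (W t0) (U t0) xi r * (fr_dir n1 d alpha (W t0) (U t0) dW dU xi r -
       rsum K (fun k => softmax K n1 d alpha (W t0) (U t0) xi k * fr_dir n1 d alpha (W t0) (U t0) dW dU xi k))))
   with ((0 - softmax K n1 d alpha (W t0) (U t0) xi r * (fr_dir n1 d alpha (W t0) (U t0) dW dU xi r -
       rsum K (fun k => softmax K n1 d alpha (W t0) (U t0) xi k * fr_dir n1 d alpha (W t0) (U t0) dW dU xi k))) + 0) by ring.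
  apply dl_plus; [|apply dl_const]. apply dl_minus; [apply dl_const|]. apply dl_softmax; auto.
Qed.

Lemma dl_sample_term K n1 d alpha (W U : R -> nat -> nat -> R) dW dU xi yv t0 : (yv < K)%nat ->
  (forall r l, (r < K)%nat -> (l < n1)%nat -> derivable_pt_lim (fun t => W t r l) t0 (dW r l)) ->
  (forall l m, (l < n1)%nat -> (m < d)%nat -> derivable_pt_lim (fun t => U t l m) t0 (dU l m)) ->
  (forall l, (l < n1)%nat -> preact_regular d (U t0) xi l) ->
  derivable_pt_lim (fun t => - lossL K yv (fun r => fr n1 d alpha (W t) (U t) r xi)
       + rsum K (fun r => fr n1 d alpha (W t) (U t) r xi)) t0
    (rsum K (fun r => out_coef K n1 d alpha (W t0) (U t0) xi yv r * fr_dir n1 d alpha (W t0) (U t0) dW dU xi r)).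
Proof.
  intros Hy HW HU Hz. unfold lossL.
  assert (HS := softmax_den_pos K n1 d alpha (W t0) (U t0) xi ltac:(lia)).
  eapply dl_eq_val.
  { apply dl_plus.
    - apply derivable_pt_lim_opp, dl_plus.
      + apply derivable_pt_lim_opp, (dl_fr n1 d alpha W U dW dU xi yv t0); auto.
      + apply (dl_ln (fun t => softmax_den K n1 d alpha (W t) (U t) xi)); auto.
        apply dl_softmax_den; auto.
    - apply (dl_rsum K (fun t r => fr n1 d alpha (W t) (U t) r xi)); intros. apply dl_fr; auto. }
  set (S := softmax_den K n1 d alpha (W t0) (U t0) xi) in *.
  set (fd := fr_dir n1 d alpha (W t0) (U t0) dW dU xi).
  rewrite (rsum_ext K (fun r => out_coef K n1 d alpha (W t0) (U t0) xi yv r * fd r)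
    (fun r => kron r yv * fd r - / S * (exp (fr n1 d alpha (W t0) (U t0) r xi) * fd r) + fd r))
    by (intros; unfold out_coef, softmax, Rdiv; fold S; ring).
  rewrite rsum_plus, rsum_minus, rsum_kron_l, rsum_scal by auto. ring.
Qed.

Lemma dl_Phi n K n1 d x y alpha eps (W U : R -> nat -> nat -> R) dW dU t0 :
  (forall i, (i < n)%nat -> (y i < K)%nat) ->
  (forall r l, (r < K)%nat -> (l < n1)%nat -> derivable_pt_lim (fun t => W t r l) t0 (dW r l)) ->
  (forall l m, (l < n1)%nat -> (m < d)%nat -> derivable_pt_lim (fun t => U t l m) t0 (dU l m)) ->
  (forall i l, (i < n)%nat -> (l < n1)%nat -> preact_regular d (U t0) (x i) l) ->
  derivable_pt_lim (fun t => Phi n K n1 d x y alpha eps (W t) (U t)) t0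
    (/ INR n * rsum n (fun i => rsum K (fun r => out_coef K n1 d alpha (W t0) (U t0) (x i) (y i) r
          * fr_dir n1 d alpha (W t0) (U t0) dW dU (x i) r))
     + eps * (rsum K (fun r => rsum n1 (fun l => dW r l)) + rsum n1 (fun l => rsum d (fun m => dU l m)))).
Proof.
  intros Hy HW HU Hz. unfold Phi. apply dl_plus.
  - apply dl_scal. apply (dl_rsum n (fun t i => - lossL K (y i) (fun r => fr n1 d alpha (W t) (U t) r (x i)) +
        rsum K (fun r => fr n1 d alpha (W t) (U t) r (x i)))).
    intros i Hi. apply dl_sample_term; auto.
  - apply dl_scal. apply dl_plus.
    + apply (dl_rsum K (fun t r => rsum n1 (fun l => W t r l))). intros r Hr.
      apply (dl_rsum n1 (fun t l => W t r l)). intros; auto.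
    + apply (dl_rsum n1 (fun t l => rsum d (fun m => U t l m))). intros l Hl.
      apply (dl_rsum d (fun t m => U t l m)). intros; auto.
Qed.

Lemma preact_nonneg n1 d u xi l : posU n1 d u -> (forall m, (m < d)%nat -> 0 <= xi m) -> (l < n1)%nat -> 0 <= preact d u xi l.
Proof. intros. unfold preact. apply rsum_nonneg; intros. apply Rmult_le_pos; auto. left; apply H; auto. Qed.

Lemma act_nonneg d alpha u xi l : 0 <= act d alpha u xi l.
Proof. apply rpow_nonneg. Qed.

Lemma act1_nonneg d alpha u xi l : 0 <= alpha l -> 0 <= act1 d alpha u xi l.
Proof. intros. unfold act1. apply Rmult_le_pos; auto. apply rpow_nonneg. Qed.

Lemma act2_nonneg d alpha u xi l : 1 <= alpha l -> 0 <= act2 d alpha u xi l.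
Proof. intros. unfold act2. apply Rmult_le_pos; [lra|]. apply Rmult_le_pos; [lra|]. apply rpow_nonneg. Qed.

Lemma act1_mul_preact d alpha u xi l : 0 <= preact d u xi l -> act1 d alpha u xi l * preact d u xi l = alpha l * act d alpha u xi l.
Proof.
  intros Hz. unfold act1, act. destruct Hz as [Hz|Hz].
  - rewrite !rpow_pos_eq by auto. rewrite Rpower_minus1 by auto. field. lra.
  - rewrite <- Hz. rewrite !rpow_0. ring.
Qed.

Lemma act2_mul_preact d alpha u xi l : 0 <= preact d u xi l -> act2 d alpha u xi l * preact d u xi l = (alpha l - 1) * act1 d alpha u xi l.
Proof.
  intros Hz. unfold act2, act1. destruct Hz as [Hz|Hz].
  - rewrite !rpow_pos_eq by auto. rewrite (Rpower_minus1 _ (alpha l - 1)) by auto. field. lra.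
  - rewrite <- Hz. rewrite !rpow_0. ring.
Qed.

Lemma softmax_pos K n1 d alpha w u xi r : (0 < K)%nat -> 0 < softmax K n1 d alpha w u xi r.
Proof. intros. unfold softmax. apply Rdiv_lt_0_compat. apply exp_pos. apply softmax_den_pos; auto. Qed.

Lemma softmax_sum K n1 d alpha w u xi : (0 < K)%nat -> rsum K (fun r => softmax K n1 d alpha w u xi r) = 1.
Proof.
  intros. unfold softmax. unfold Rdiv. rewrite rsum_scal_r. fold (softmax_den K n1 d alpha w u xi).
  apply Rinv_r. pose proof (softmax_den_pos K n1 d alpha w u xi H); lra.
Qed.

Lemma softmax_le1 K n1 d alpha w u xi r : (r < K)%nat -> softmax K n1 d alpha w u xi r <= 1.
Proof.
  intros. rewrite <- (softmax_sum K n1 d alpha w u xi) by lia. apply rsum_single_ge; auto.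
  intros; left; apply softmax_pos; lia.
Qed.

Lemma out_coef_ge K n1 d alpha w u xi yv r : 1 - softmax K n1 d alpha w u xi r <= out_coef K n1 d alpha w u xi yv r.
Proof. unfold out_coef, kron. destruct (Nat.eqb r yv); lra. Qed.

Lemma out_coef_nonneg K n1 d alpha w u xi yv r : (r < K)%nat -> 0 <= out_coef K n1 d alpha w u xi yv r.
Proof. intros. pose proof (out_coef_ge K n1 d alpha w u xi yv r). pose proof (softmax_le1 K n1 d alpha w u xi r H). lra. Qed.

(** * Closed forms of the gradient *)

Definition gradW_sample K n1 d alpha (w u : nat -> nat -> R) xi yv r l :=
  out_coef K n1 d alpha w u xi yv r * act d alpha u xi l.
Definition gradU_sample K n1 d alpha (w u : nat -> nat -> R) (xi : nat -> R) yv l m :=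
  rsum K (fun r => out_coef K n1 d alpha w u xi yv r * w r l) * act1 d alpha u xi l * xi m.

Definition gradW_sample_dir K n1 d alpha (w u dW dU : nat -> nat -> R) xi yv r l :=
  out_coef_dir K n1 d alpha w u dW dU xi r * act d alpha u xi l
  + out_coef K n1 d alpha w u xi yv r * act_dir d alpha u dU xi l.
Definition gradU_sample_dir K n1 d alpha (w u dW dU : nat -> nat -> R) (xi : nat -> R) yv l m :=
  (rsum K (fun r => out_coef_dir K n1 d alpha w u dW dU xi r * w r l
                    + out_coef K n1 d alpha w u xi yv r * dW r l) * act1 d alpha u xi l
   + rsum K (fun r => out_coef K n1 d alpha w u xi yv r * w r l) * act1_dir d alpha u dU xi l) * xi m.

Definition gradW_expr n K n1 d x y alpha eps (w u : nat -> nat -> R) r l :=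
  / INR n * rsum n (fun i => gradW_sample K n1 d alpha w u (x i) (y i) r l) + eps.
Definition gradU_expr n K n1 d x y alpha eps (w u : nat -> nat -> R) l m :=
  / INR n * rsum n (fun i => gradU_sample K n1 d alpha w u (x i) (y i) l m) + eps.

Definition gradW_expr_dir n K n1 d x y alpha (w u dW dU : nat -> nat -> R) r l :=
  / INR n * rsum n (fun i => gradW_sample_dir K n1 d alpha w u dW dU (x i) (y i) r l).
Definition gradU_expr_dir n K n1 d x y alpha (w u dW dU : nat -> nat -> R) l m :=
  / INR n * rsum n (fun i => gradU_sample_dir K n1 d alpha w u dW dU (x i) (y i) l m).

Lemma preact_regular_of_pos n1 d u xi l : posU n1 d u -> (forall m, (m < d)%nat -> 0 <= xi m) -> (l < n1)%nat ->
  preact_regular d u xi l.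
Proof.
  intros Hu Hx Hl. unfold preact_regular.
  destruct (classic (exists m, (m < d)%nat /\ xi m <> 0)) as [[m [Hm Hne]] | Hno].
  - left. unfold preact. apply (rsum_pos _ _ m); auto.
    + intros j Hj. apply Rmult_le_pos; [left; apply Hu|apply Hx]; auto.
    + apply Rmult_lt_0_compat; auto. specialize (Hx m Hm); lra.
  - right. intros m Hm. apply NNPP. intro Hne. apply Hno; eauto.
Qed.

Definition dir_w (k l : nat) : nat -> nat -> R := fun r l' => kron r k * kron l' l.

Definition dir_u (l m : nat) : nat -> nat -> R := fun l' m' => kron l' l * kron m' m.

Definition dir0 : nat -> nat -> R := fun _ _ => 0.

Lemma preact_dir0 d xi l : preact_dir d dir0 xi l = 0.
Proof. unfold preact_dir, dir0. rewrite (rsum_ext _ _ (fun _ => 0)) by (intros; ring). apply rsum_zero. Qed.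

Lemma gradW_eq n K n1 d x y alpha eps w u r l :
  (forall i, (i < n)%nat -> (y i < K)%nat) ->
  (forall i m, (i < n)%nat -> (m < d)%nat -> 0 <= x i m) ->
  posU n1 d u -> (r < K)%nat -> (l < n1)%nat ->
  gradW (Phi n K n1 d x y alpha eps) r l w u = gradW_expr n K n1 d x y alpha eps w u r l.
Proof.
  intros Hy Hx Hu Hr Hl. unfold gradW. apply Deriv_unique.
  eapply dl_eq_val.
  - apply (dl_Phi n K n1 d x y alpha eps (fun t => upd2 w r l t) (fun _ => u)
        (fun r' l' => kron r' r * kron l' l) dir0 (w r l)); auto.
    + intros; apply dl_upd2.
    + intros; apply dl_const.
    + intros. apply (preact_regular_of_pos n1); auto.
  - rewrite upd2_same. simpl. rewrite rsum2_kron by auto. unfold dir0 at 1 2. rewrite rsum2_zero.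
    unfold gradW_expr, gradW_sample. f_equal; [|ring]. f_equal. apply rsum_ext; intros i Hi.
    rewrite (rsum_ext K _ (fun r' => (out_coef K n1 d alpha w u (x i) (y i) r' * act d alpha u (x i) l) * kron r' r)).
    + apply rsum_kron_r; auto.
    + intros r' Hr'. unfold fr_dir, act_dir. rewrite (rsum_ext n1 _ (fun l' => kron r' r * (act d alpha u (x i) l' * kron l' l))).
      * rewrite rsum_scal, rsum_kron_r; auto. ring.
      * intros; rewrite preact_dir0; ring.
Qed.

Lemma gradU_eq n K n1 d x y alpha eps w u l m :
  (forall i, (i < n)%nat -> (y i < K)%nat) ->
  (forall i m, (i < n)%nat -> (m < d)%nat -> 0 <= x i m) ->
  posU n1 d u -> (l < n1)%nat -> (m < d)%nat ->
  gradU (Phi n K n1 d x y alpha eps) l m w u = gradU_expr n K n1 d x y alpha eps w u l m.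
Proof.
  intros Hy Hx Hu Hl Hm. unfold gradU. apply Deriv_unique.
  eapply dl_eq_val.
  - apply (dl_Phi n K n1 d x y alpha eps (fun _ => w) (fun t => upd2 u l m t)
        dir0 (fun l' m' => kron l' l * kron m' m) (u l m)); auto.
    + intros; apply dl_const.
    + intros; apply dl_upd2.
    + intros. rewrite upd2_same. apply (preact_regular_of_pos n1); auto.
  - rewrite upd2_same. simpl. rewrite rsum2_kron by auto. unfold dir0 at 1 2. rewrite rsum2_zero.
    unfold gradU_expr, gradU_sample. f_equal; [|ring]. f_equal. apply rsum_ext; intros i Hi.
    rewrite <- rsum_scal_r. rewrite <- rsum_scal_r.
    apply rsum_ext; intros r' Hr'. unfold fr_dir, act_dir.
    rewrite (rsum_ext n1 _ (fun l' => (w r' l' * act1 d alpha u (x i) l' * x i m) * kron l' l)).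
    + rewrite rsum_kron_r; auto. ring.
    + intros l' Hl'. unfold preact_dir. rewrite Rmult_0_l, Rplus_0_l.
      rewrite (rsum_ext d _ (fun m' => (kron l' l * x i m') * kron m' m)) by (intros; ring).
      rewrite rsum_kron_r by auto. ring.
Qed.

Lemma GW_eq n K n1 d x y alpha eps pw rhow i j w u :
  data_ok n K n1 d x y alpha -> posU n1 d u -> (i < K)%nat -> (j < n1)%nat ->
  GW (Phi n K n1 d x y alpha eps) n1 pw rhow i j w u =
  rhow * psi (conj pw) (gradW_expr n K n1 d x y alpha eps w u i j) /
    pnorm_mat n1 1 pw (fun a b => psi (conj pw) (gradW_expr n K n1 d x y alpha eps w u i a)).
Proof.
  intros [Hn [Hx [Hy Hal]]] Hu Hi Hj. unfold GW.
  rewrite gradW_eq by auto. rewrite pnorm_vec_mat. f_equal. apply pnorm_mat_ext; intros.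
  rewrite gradW_eq; auto.
Qed.

Lemma GU_eq n K n1 d x y alpha eps pu rhou a b w u :
  data_ok n K n1 d x y alpha -> posU n1 d u -> (a < n1)%nat -> (b < d)%nat ->
  GU (Phi n K n1 d x y alpha eps) n1 d pu rhou a b w u =
  rhou * psi (conj pu) (gradU_expr n K n1 d x y alpha eps w u a b) /
    pnorm_mat n1 d pu (fun a' b' => psi (conj pu) (gradU_expr n K n1 d x y alpha eps w u a' b')).
Proof.
  intros [Hn [Hx [Hy Hal]]] Hu Ha Hb. unfold GU.
  rewrite gradU_eq by auto. f_equal. apply pnorm_mat_ext; intros.
  rewrite gradU_eq; auto.
Qed.

Lemma gradW_expr_pos n K n1 d x y alpha eps w u r l :
  data_ok n K n1 d x y alpha -> 0 < eps -> (r < K)%nat -> 0 < gradW_expr n K n1 d x y alpha eps w u r l.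
Proof.
  intros [Hn [Hx [Hy Hal]]] He Hr. unfold gradW_expr, gradW_sample.
  assert (0 <= / INR n * rsum n (fun i => out_coef K n1 d alpha w u (x i) (y i) r * act d alpha u (x i) l)).
  { apply Rmult_le_pos. left; apply Rinv_0_lt_compat, lt_0_INR; auto.
    apply rsum_nonneg; intros. apply Rmult_le_pos; [apply out_coef_nonneg; auto| apply act_nonneg]. }
  lra.
Qed.

Lemma gradU_expr_pos n K n1 d x y alpha eps w u a b :
  data_ok n K n1 d x y alpha -> 0 < eps -> posW K n1 w -> (a < n1)%nat -> (b < d)%nat ->
  0 < gradU_expr n K n1 d x y alpha eps w u a b.
Proof.
  intros [Hn [Hx [Hy Hal]]] He Hw Ha Hb. unfold gradU_expr, gradU_sample.
  assert (0 <= / INR n * rsum n (fun i => rsum K (fun r => out_coef K n1 d alpha w u (x i) (y i) r * w r a)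
       * act1 d alpha u (x i) a * x i b)).
  { apply Rmult_le_pos. left; apply Rinv_0_lt_compat, lt_0_INR; auto.
    apply rsum_nonneg; intros. apply Rmult_le_pos; [apply Rmult_le_pos|]; auto.
    - apply rsum_nonneg; intros. apply Rmult_le_pos; [apply out_coef_nonneg; auto| left; apply Hw; auto].
    - apply act1_nonneg. specialize (Hal a Ha); lra. }
  lra.
Qed.

Lemma dl_gradW_expr n K n1 d x y alpha eps (W U : R -> nat -> nat -> R) dW dU t0 r l :
  (r < K)%nat -> (l < n1)%nat ->
  (forall r l, (r < K)%nat -> (l < n1)%nat -> derivable_pt_lim (fun t => W t r l) t0 (dW r l)) ->
  (forall l m, (l < n1)%nat -> (m < d)%nat -> derivable_pt_lim (fun t => U t l m) t0 (dU l m)) ->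
  (forall i l, (i < n)%nat -> (l < n1)%nat -> preact_regular d (U t0) (x i) l) ->
  derivable_pt_lim (fun t => gradW_expr n K n1 d x y alpha eps (W t) (U t) r l) t0
    (gradW_expr_dir n K n1 d x y alpha (W t0) (U t0) dW dU r l).
Proof.
  intros Hr Hl HW HU Hz. unfold gradW_expr, gradW_expr_dir, gradW_sample, gradW_sample_dir.
  replace (/ INR n * rsum n (fun i => out_coef_dir K n1 d alpha (W t0) (U t0) dW dU (x i) r * act d alpha (U t0) (x i) l
        + out_coef K n1 d alpha (W t0) (U t0) (x i) (y i) r * act_dir d alpha (U t0) dU (x i) l))
   with (/ INR n * rsum n (fun i => out_coef_dir K n1 d alpha (W t0) (U t0) dW dU (x i) r * act d alpha (U t0) (x i) l
        + out_coef K n1 d alpha (W t0) (U t0) (x i) (y i) r * act_dir d alpha (U t0) dU (x i) l) + 0) by ring.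
  apply dl_plus; [|apply dl_const]. apply dl_scal.
  apply (dl_rsum n (fun t i => out_coef K n1 d alpha (W t) (U t) (x i) (y i) r * act d alpha (U t) (x i) l)).
  intros i Hi.
  apply (dl_mult (fun t => out_coef K n1 d alpha (W t) (U t) (x i) (y i) r) (fun t => act d alpha (U t) (x i) l)).
  - apply dl_out_coef; auto.
  - apply dl_act; auto.
Qed.

Lemma dl_gradU_expr n K n1 d x y alpha eps (W U : R -> nat -> nat -> R) dW dU t0 l m :
  (l < n1)%nat -> (m < d)%nat ->
  (forall r l, (r < K)%nat -> (l < n1)%nat -> derivable_pt_lim (fun t => W t r l) t0 (dW r l)) ->
  (forall l m, (l < n1)%nat -> (m < d)%nat -> derivable_pt_lim (fun t => U t l m) t0 (dU l m)) ->
  (forall i l, (i < n)%nat -> (l < n1)%nat -> preact_regular d (U t0) (x i) l) ->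
  derivable_pt_lim (fun t => gradU_expr n K n1 d x y alpha eps (W t) (U t) l m) t0
    (gradU_expr_dir n K n1 d x y alpha (W t0) (U t0) dW dU l m).
Proof.
  intros Hl Hm HW HU Hz. unfold gradU_expr, gradU_expr_dir, gradU_sample, gradU_sample_dir.
  eapply dl_eq_val.
  { apply dl_plus; [|apply (dl_const eps)]. apply dl_scal.
    apply (dl_rsum n (fun t i => rsum K (fun r => out_coef K n1 d alpha (W t) (U t) (x i) (y i) r * W t r l)
       * act1 d alpha (U t) (x i) l * x i m)).
    intros i Hi.
    apply (dl_mult (fun t => rsum K (fun r => out_coef K n1 d alpha (W t) (U t) (x i) (y i) r * W t r l)
       * act1 d alpha (U t) (x i) l) (fun _ => x i m)); [|apply dl_const].
    apply (dl_mult (fun t => rsum K (fun r => out_coef K n1 d alpha (W t) (U t) (x i) (y i) r * W t r l))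
       (fun t => act1 d alpha (U t) (x i) l)).
    - apply (dl_rsum K (fun t r => out_coef K n1 d alpha (W t) (U t) (x i) (y i) r * W t r l)).
      intros r Hr. apply (dl_mult (fun t => out_coef K n1 d alpha (W t) (U t) (x i) (y i) r) (fun t => W t r l)).
      + apply dl_out_coef; auto.
      + auto.
    - apply dl_act1; auto. }
  rewrite Rplus_0_r. f_equal. apply rsum_ext; intros i Hi. ring.
Qed.

(** * Bounding the network by Psi *)

Definition PsiA_J n1 alpha p q (delta : nat -> R) t : R :=
  match omin n1 (inJ alpha p q) alpha with
  | None => 0
  | Some ab =>
      rpow (rsum n1 (fun l => if inJ alpha p q l then
              rpow (delta l * rpow t (alpha l)) (p * q / (q - ab * p)) else 0)) (1 - ab * p / q)
  end.

Definition PsiA_Jc n1 alpha p q (delta : nat -> R) t : R :=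
  odflt0 (omax n1 (fun l => negb (inJ alpha p q l)) (fun l => rpow (delta l * rpow t (alpha l)) p)).

Lemma PsiA_split n1 alpha p q delta t :
  PsiA n1 alpha p q delta t = rpow (PsiA_J n1 alpha p q delta t + PsiA_Jc n1 alpha p q delta t) (/ p).
Proof. reflexivity. Qed.

Lemma PsiA_nonneg n1 alpha p q delta t : 0 <= PsiA n1 alpha p q delta t.
Proof. apply rpow_nonneg. Qed.

Section PsiA_bound.

Variables (n1 : nat) (alpha delta bb : nat -> R) (p q t : R).
Hypotheses (Hp : 1 < p) (Hq : 1 < q) (Ht : 0 <= t).
Hypotheses (Hal : forall l, (l < n1)%nat -> 1 <= alpha l) (Hd : forall l, (l < n1)%nat -> 0 <= delta l).
Hypotheses (Hbb : forall l, (l < n1)%nat -> 0 <= bb l) (Hsum : rsum n1 (fun l => rpow (bb l) q) <= 1).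

Let c l := delta l * rpow t (alpha l).

Lemma bb_le1 l : (l < n1)%nat -> bb l <= 1.
Proof.
  intros Hl. destruct (Rle_dec (bb l) 1); auto. exfalso.
  assert (1 < rpow (bb l) q) by (apply rpow_gt1; lra).
  pose proof (rsum_single_ge n1 (fun l => rpow (bb l) q) l Hl (fun _ _ => rpow_nonneg _ _)). lra.
Qed.

(* On [J] the exponents [alpha_l p] stay below [q]; Hölder with exponent [q / (alpha_min p)] trades
   [bb^(alpha_l p) <= bb^(alpha_min p)] against the constraint [sum bb^q <= 1]. *)
Lemma PsiA_J_ge :
  rsum n1 (fun l => if inJ alpha p q l then rpow (c l) p * rpow (bb l) (alpha l * p) else 0)
  <= PsiA_J n1 alpha p q delta t.
Proof.
  set (J := inJ alpha p q).
  assert (Hc : forall l, (l < n1)%nat -> 0 <= c l)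
    by (intros; apply Rmult_le_pos; [auto| apply rpow_nonneg]).
  unfold PsiA_J. fold J. destruct (omin n1 J alpha) as [ab|] eqn:Eab.
  2:{ rewrite (rsum_ext n1 _ (fun _ => 0)), rsum_zero; [lra|].
      intros l Hl. rewrite (omin_none n1 J alpha Eab l Hl). reflexivity. }
  destruct (omin_some n1 J alpha ab Eab) as [Hmin [l0 [Hl0 [HJ0 Hab]]]].
  assert (Hab1 : 1 <= ab) by (rewrite <- Hab; auto).
  assert (Habq : ab * p < q).
  { rewrite <- Hab. unfold J, inJ in HJ0. destruct (Rlt_dec (alpha l0 * p) q); auto; discriminate. }
  set (r := q / (ab * p)).
  assert (Hr : 1 < r) by (unfold r; apply (Rmult_lt_reg_r (ab * p)); [nra|]; field_simplify; nra).
  assert (Hcr : conj r = q / (q - ab * p)) by (unfold conj, r; field; split; nra).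
  eapply Rle_trans.
  { apply (rsum_le n1 _ (fun l => (if J l then rpow (bb l) (ab * p) else 0)
                                   * (if J l then rpow (c l) p else 0))).
    intros l Hl. destruct (J l) eqn:HJl; [|lra].
    rewrite (Rmult_comm (rpow (c l) p)). apply Rmult_le_compat_r; [apply rpow_nonneg|].
    apply rpow_le_exp; auto using bb_le1. pose proof (Hmin l Hl HJl). nra. }
  eapply Rle_trans.
  { apply (holder n1 r); auto; intros l Hl; destruct (J l); try apply rpow_nonneg; lra. }
  replace (rpow (rsum n1 _) (1 - ab * p / q))
    with (1 * rpow (rsum n1 (fun l => rpow (if J l then rpow (c l) p else 0) (conj r))) (/ conj r)).
  - apply Rmult_le_compat_r; [apply rpow_nonneg|].
    apply rpow_le1; [apply rsum_nonneg; intros; apply rpow_nonneg| |left; apply Rinv_0_lt_compat; lra].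
    eapply Rle_trans; [|apply Hsum]. apply rsum_le; intros l Hl. destruct (J l).
    + rewrite rpow_rpow by auto. right. f_equal. unfold r. field. nra.
    + rewrite rpow_0. apply rpow_nonneg.
  - rewrite Rmult_1_l, Hcr.
    replace (/ (q / (q - ab * p))) with (1 - ab * p / q) by (field; split; nra).
    f_equal. apply rsum_ext; intros l Hl. destruct (J l).
    + rewrite rpow_rpow by auto. f_equal. field. nra.
    + apply rpow_0.
Qed.

(* Off [J] we have [bb^(alpha_l p) <= bb^q], so the sum is at most the largest [c_l^p]. *)
Lemma PsiA_Jc_ge :
  rsum n1 (fun l => if inJ alpha p q l then 0 else rpow (c l) p * rpow (bb l) (alpha l * p))
  <= PsiA_Jc n1 alpha p q delta t.
Proof.
  set (J := inJ alpha p q). set (T2 := PsiA_Jc n1 alpha p q delta t).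
  assert (HT2 : 0 <= T2) by (apply omax_nonneg; intros; apply rpow_nonneg).
  eapply Rle_trans.
  { apply (rsum_le n1 _ (fun l => T2 * (if J l then 0 else rpow (bb l) q))).
    intros l Hl. destruct (J l) eqn:HJl; [lra|].
    apply Rmult_le_compat; [apply rpow_nonneg| apply rpow_nonneg| |].
    - apply (omax_ge_P n1 (fun l => negb (J l)) (fun l => rpow (c l) p) l Hl). rewrite HJl; auto.
    - apply rpow_le_exp; auto using bb_le1.
      unfold J, inJ in HJl. destruct (Rlt_dec (alpha l * p) q); [discriminate| lra]. }
  rewrite rsum_scal.
  assert (0 <= rsum n1 (fun l => if J l then 0 else rpow (bb l) q))
    by (apply rsum_nonneg; intros; destruct (J i); [lra| apply rpow_nonneg]).
  assert (rsum n1 (fun l => if J l then 0 else rpow (bb l) q) <= 1).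
  { eapply Rle_trans; [|apply Hsum]. apply rsum_le; intros l Hl. destruct (J l); [apply rpow_nonneg| lra]. }
  nra.
Qed.

Lemma PsiA_ge :
  rpow (rsum n1 (fun l => rpow (delta l * rpow t (alpha l) * rpow (bb l) (alpha l)) p)) (/ p)
  <= PsiA n1 alpha p q delta t.
Proof.
  rewrite PsiA_split. apply rpow_le_base; [apply rsum_nonneg; intros; apply rpow_nonneg| |
    left; apply Rinv_0_lt_compat; lra].
  rewrite (rsum_ext n1 _ (fun l =>
     (if inJ alpha p q l then rpow (c l) p * rpow (bb l) (alpha l * p) else 0)
     + (if inJ alpha p q l then 0 else rpow (c l) p * rpow (bb l) (alpha l * p)))).
  - rewrite rsum_plus. apply Rplus_le_compat; [apply PsiA_J_ge| apply PsiA_Jc_ge].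
  - intros l Hl. unfold c.
    rewrite rpow_mult, rpow_rpow by (auto; try apply Rmult_le_pos; auto; apply rpow_nonneg).
    destruct (inJ alpha p q l); ring.
Qed.

End PsiA_bound.

Definition row_norm d q (u : nat -> nat -> R) l : R := rpow (rsum d (fun m => rpow (u l m) q)) (/ q).

Lemma preact_le_row_norm n n1 d (x : nat -> nat -> R) pu (u : nat -> nat -> R) i l :
  1 < pu -> posU n1 d u -> (forall m, (m < d)%nat -> 0 <= x i m) -> (i < n)%nat -> (l < n1)%nat ->
  preact d u (x i) l <= row_norm d pu u l * rho_x n d x pu.
Proof.
  intros Hpu Hu Hx Hi Hl. unfold preact. eapply Rle_trans.
  { apply (holder d pu (fun m => u l m) (fun m => x i m)); auto. intros; left; apply Hu; auto. }
  apply Rmult_le_compat_l; [apply rpow_nonneg|].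
  eapply Rle_trans; [|apply (omax_ge n (fun i => pnorm_vec d (conj pu) (x i)) i); auto].
  right. unfold pnorm_vec. f_equal. apply rsum_ext; intros m Hm.
  rewrite Rabs_right; auto. apply Rle_ge; auto.
Qed.

Lemma row_norm_scaled_sum_le1 n1 d q rho (u : nat -> nat -> R) :
  1 < q -> 0 < rho -> posU n1 d u -> pnorm_mat n1 d q u <= rho ->
  rsum n1 (fun l => rpow (row_norm d q u l / rho) q) <= 1.
Proof.
  intros Hq Hrho Hu Hun.
  set (U := rsum n1 (fun l => rsum d (fun m => rpow (u l m) q))).
  assert (HU0 : 0 <= U) by (apply rsum_nonneg; intros; apply rsum_nonneg; intros; apply rpow_nonneg).
  assert (HUn : rpow U (/ q) <= rho).
  { eapply Rle_trans; [|apply Hun]. right. unfold pnorm_mat. f_equal. unfold U.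
    apply rsum_ext; intros; apply rsum_ext; intros. rewrite Rabs_right; auto. left; apply Hu; auto. }
  assert (HUq : U <= rpow rho q).
  { rewrite <- (rpow_inv_r U q) by (auto; lra). apply rpow_le_base; [apply rpow_nonneg| auto| lra]. }
  assert (0 < rpow rho q) by (rewrite rpow_pos_eq by auto; apply Rpower_pos).
  rewrite (rsum_ext n1 _ (fun l => rsum d (fun m => rpow (u l m) q) * / rpow rho q)).
  - rewrite rsum_scal_r. fold U. apply (Rmult_le_reg_r (rpow rho q)); auto.
    rewrite Rmult_assoc, Rinv_l by lra. lra.
  - intros l Hl. unfold row_norm. rewrite rpow_div_scale, rpow_inv_r by
      (try apply rpow_nonneg; try apply rsum_nonneg; intros; try apply rpow_nonneg; auto; lra).
    reflexivity.
Qed.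

(* Hölder in [l] with exponents [pw, pw'] bounds the sum by [||w_k||_pw] times the [pw']-norm of
   [delta_l z_l^alpha_l], and [z_l <= rhou rx (||u_l||_pu / rhou)] puts the latter in the form of [PsiA_ge]. *)
Lemma fr_weighted_le_PsiA n n1 d (x : nat -> nat -> R) (alpha : nat -> R) pw pu rhow rhou K
  (w u : nat -> nat -> R) i k (delta : nat -> R) :
  (forall i m, (i < n)%nat -> (m < d)%nat -> 0 <= x i m) ->
  (forall l, (l < n1)%nat -> 1 <= alpha l) -> 1 < pw -> 1 < pu -> 0 < rhow -> 0 < rhou ->
  inBpp K n1 d pw pu rhow rhou w u -> (i < n)%nat -> (k < K)%nat ->
  (forall l, (l < n1)%nat -> 0 <= delta l) ->
  rsum n1 (fun l => w k l * (delta l * act d alpha u (x i) l)) <=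
  rhow * PsiA n1 alpha (conj pw) pu delta (rhou * rho_x n d x pu).
Proof.
  intros Hx Hal Hpw Hpu Hrw Hru [Hw [Hu [Hun Hwn]]] Hi Hk Hd.
  change (posW K n1 w) in Hw. change (posU n1 d u) in Hu.
  assert (Hp := conj_gt1 pw Hpw).
  set (t := rhou * rho_x n d x pu).
  assert (Ht : 0 <= t) by (apply Rmult_le_pos; [lra| apply omax_nonneg; intros; apply rpow_nonneg]).
  set (bb := fun l => row_norm d pu u l / rhou).
  assert (Hbb0 : forall l, 0 <= bb l)
    by (intros; apply Rmult_le_pos; [apply rpow_nonneg| left; apply Rinv_0_lt_compat; auto]).
  assert (Hact : forall l, (l < n1)%nat ->
            delta l * act d alpha u (x i) l <= delta l * rpow t (alpha l) * rpow (bb l) (alpha l)).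
  { intros l Hl. rewrite Rmult_assoc. apply Rmult_le_compat_l; auto.
    rewrite <- rpow_mult by auto. unfold act. apply rpow_le_base; [apply (preact_nonneg n1); auto| |].
    - eapply Rle_trans; [apply (preact_le_row_norm n n1 d x pu); auto|]. right. unfold t, bb. field. lra.
    - specialize (Hal l Hl); lra. }
  eapply Rle_trans.
  { apply (holder n1 pw (fun l => w k l) (fun l => delta l * act d alpha u (x i) l)).
    - auto.
    - intros; left; apply Hw; auto.
    - intros; apply Rmult_le_pos; [auto| apply act_nonneg]. }
  apply Rmult_le_compat; [apply rpow_nonneg| apply rpow_nonneg| |].
  - eapply Rle_trans; [|apply (Hwn k Hk)]. right. unfold pnorm_vec. f_equal. apply rsum_ext; intros.
    rewrite Rabs_right; auto. left; apply Hw; auto.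
  - eapply Rle_trans; [|apply (PsiA_ge n1 alpha delta bb (conj pw) pu t); auto;
      apply row_norm_scaled_sum_le1; auto].
    apply rpow_le_base; [apply rsum_nonneg; intros; apply rpow_nonneg| |
      left; apply Rinv_0_lt_compat; lra].
    apply rsum_le; intros l Hl. apply rpow_le_base; [apply Rmult_le_pos; [auto| apply act_nonneg]| |lra].
    apply Hact; auto.
Qed.

(** * Directional derivative bounds *)

Definition softmax_jac K n1 d alpha w u xi r k :=
  softmax K n1 d alpha w u xi r * (kron r k - softmax K n1 d alpha w u xi k).

Lemma out_coef_dir_eq K n1 d alpha w u dW dU xi r : (r < K)%nat ->
  out_coef_dir K n1 d alpha w u dW dU xi r = - rsum K (fun k => softmax_jac K n1 d alpha w u xi r k * fr_dir n1 d alpha w u dW dU xi k).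
Proof.
  intros Hr. unfold out_coef_dir, softmax_jac. f_equal.
  rewrite (rsum_ext K (fun k => softmax K n1 d alpha w u xi r * (kron r k - softmax K n1 d alpha w u xi k) * fr_dir n1 d alpha w u dW dU xi k) (fun k => softmax K n1 d alpha w u xi r * (kron k r * fr_dir n1 d alpha w u dW dU xi k)
     - softmax K n1 d alpha w u xi r * (softmax K n1 d alpha w u xi k * fr_dir n1 d alpha w u dW dU xi k))).
  - rewrite rsum_minus, !rsum_scal, rsum_kron_l by auto. ring.
  - intros k Hk. unfold kron. rewrite (Nat.eqb_sym k r). ring.
Qed.

Lemma softmax_jac_abs_sum K n1 d alpha w u xi yv r : (r < K)%nat ->
  rsum K (fun k => Rabs (softmax_jac K n1 d alpha w u xi r k)) <= 2 * out_coef K n1 d alpha w u xi yv r.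
Proof.
  intros Hr. unfold softmax_jac.
  set (s := softmax K n1 d alpha w u xi).
  assert (Hs : forall k, (k < K)%nat -> 0 < s k /\ s k <= 1).
  { intros; split; [apply softmax_pos; lia| apply softmax_le1; auto]. }
  rewrite (rsum_ext K (fun k => Rabs (s r * (kron r k - s k))) (fun k => s r * (kron k r + s k - 2 * (s r * kron k r)))).
  - rewrite rsum_scal. rewrite rsum_minus, rsum_plus, rsum_scal.
    rewrite (rsum_ext K (fun k => kron k r) (fun k => kron k r * 1)) by (intros; ring).
    rewrite rsum_kron_l by auto. rewrite rsum_kron_r by auto.
    unfold s; rewrite softmax_sum by lia. fold s.
    pose proof (out_coef_ge K n1 d alpha w u xi yv r). fold s in H. destruct (Hs r Hr). nra.
  - intros k Hk. destruct (Hs r Hr), (Hs k Hk). rewrite Rabs_mult, Rabs_right by lra.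
    unfold kron. rewrite (Nat.eqb_sym k r). destruct (Nat.eqb_spec r k).
    + subst. rewrite Rabs_right by lra. ring.
    + rewrite Rabs_left1 by lra. ring.
Qed.

Lemma out_coef_dir_bound K n1 d alpha w u xi yv r P Q (dWp dUp : nat -> nat -> nat -> nat -> R) (v : nat -> nat -> R) Bf :
  (r < K)%nat -> 0 <= Bf ->
  (forall l m, (l < P)%nat -> (m < Q)%nat -> 0 <= v l m) ->
  (forall k, (k < K)%nat -> rsum P (fun l => rsum Q (fun m =>
      v l m * Rabs (fr_dir n1 d alpha w u (dWp l m) (dUp l m) xi k))) <= Bf) ->
  rsum P (fun l => rsum Q (fun m => v l m * Rabs (out_coef_dir K n1 d alpha w u (dWp l m) (dUp l m) xi r)))
   <= 2 * out_coef K n1 d alpha w u xi yv r * Bf.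
Proof.
  intros Hr HB Hv Hf.
  eapply Rle_trans.
  { apply (rsum2_le P Q _ (fun l m => rsum K (fun k => Rabs (softmax_jac K n1 d alpha w u xi r k) *
      (v l m * Rabs (fr_dir n1 d alpha w u (dWp l m) (dUp l m) xi k))))).
    intros l m Hl Hm. rewrite out_coef_dir_eq by auto. rewrite Rabs_Ropp.
    eapply Rle_trans. apply Rmult_le_compat_l; [auto|]. apply rsum_abs.
    rewrite <- rsum_scal. apply rsum_le; intros k Hk. rewrite Rabs_mult. right; ring. }
  transitivity (rsum K (fun k => Rabs (softmax_jac K n1 d alpha w u xi r k) * Bf)).
  - rewrite rsum3_swap. apply rsum_le; intros k Hk.
    rewrite (rsum2_scal P Q (Rabs (softmax_jac K n1 d alpha w u xi r k))).
    apply Rmult_le_compat_l; [apply Rabs_pos|]. apply Hf; auto.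
  - rewrite rsum_scal_r. apply Rmult_le_compat_r; auto.
    apply softmax_jac_abs_sum; auto.
Qed.

Lemma sample_mean_dir_bound n P Q (T : nat -> nat -> nat -> R) (base : nat -> R) (v : nat -> nat -> R) B eps :
  (0 < n)%nat -> 0 <= B -> 0 <= eps ->
  (forall l m, (l < P)%nat -> (m < Q)%nat -> 0 <= v l m) ->
  (forall i, (i < n)%nat -> 0 <= base i) ->
  (forall i, (i < n)%nat -> rsum P (fun l => rsum Q (fun m => v l m * Rabs (T l m i))) <= B * base i) ->
  rsum P (fun l => rsum Q (fun m => v l m * Rabs (/ INR n * rsum n (fun i => T l m i))))
   <= B * (/ INR n * rsum n base + eps).
Proof.
  intros Hn HB He Hv Hb HT.
  assert (Hinv : 0 < / INR n) by (apply Rinv_0_lt_compat, lt_0_INR; auto).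
  eapply Rle_trans.
  { apply (rsum2_le P Q _ (fun l m => / INR n * rsum n (fun i => v l m * Rabs (T l m i)))).
    intros l m Hl Hm. rewrite Rabs_mult, (Rabs_right (/ INR n)) by lra.
    rewrite rsum_scal. specialize (Hv l m Hl Hm).
    replace (v l m * (/ INR n * Rabs (rsum n (fun i => T l m i)))) with (/ INR n * (v l m * Rabs (rsum n (fun i => T l m i)))) by ring.
    apply Rmult_le_compat_l; [lra|]. apply Rmult_le_compat_l; auto. apply rsum_abs. }
  rewrite rsum2_scal. rewrite rsum3_swap.
  assert (H0 : 0 <= / INR n * rsum n base) by (apply Rmult_le_pos; [lra| apply rsum_nonneg; auto]).
  replace (B * (/ INR n * rsum n base + eps)) with (/ INR n * (rsum n (fun i => B * base i)) + B * eps)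
    by (rewrite rsum_scal; ring).
  assert (0 <= B * eps) by (apply Rmult_le_pos; auto).
  enough (/ INR n * rsum n (fun i => rsum P (fun l => rsum Q (fun m => v l m * Rabs (T l m i)))) <=
     / INR n * rsum n (fun i => B * base i)) by lra.
  apply Rmult_le_compat_l; [lra|]. apply rsum_le; auto.
Qed.

Lemma preact_dir_u d xi l m a : (m < d)%nat -> preact_dir d (dir_u l m) xi a = kron a l * xi m.
Proof.
  intros. unfold preact_dir, dir_u. rewrite (rsum_ext d _ (fun m' => (kron a l * xi m') * kron m' m)) by (intros; ring).
  apply rsum_kron_r; auto.
Qed.

Lemma act_dir0 d alpha u xi a : act_dir d alpha u dir0 xi a = 0.
Proof. unfold act_dir. rewrite preact_dir0; ring. Qed.

Lemma act1_dir0 d alpha u xi a : act1_dir d alpha u dir0 xi a = 0.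
Proof. unfold act1_dir. rewrite preact_dir0; ring. Qed.

Lemma fr_dir_w n1 d alpha w u xi k l k' : (l < n1)%nat ->
  fr_dir n1 d alpha w u (dir_w k l) dir0 xi k' = kron k' k * act d alpha u xi l.
Proof.
  intros. unfold fr_dir, dir_w. rewrite (rsum_ext n1 _ (fun l' => (kron k' k * act d alpha u xi l') * kron l' l)).
  - apply rsum_kron_r; auto.
  - intros. rewrite act_dir0. ring.
Qed.

Lemma fr_dir_u n1 d alpha w u xi l m k' : (l < n1)%nat -> (m < d)%nat ->
  fr_dir n1 d alpha w u dir0 (dir_u l m) xi k' = w k' l * act1 d alpha u xi l * xi m.
Proof.
  intros. unfold fr_dir, dir0, act_dir. rewrite (rsum_ext n1 _ (fun l' => (w k' l' * act1 d alpha u xi l' * xi m) * kron l' l)).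
  - apply rsum_kron_r; auto.
  - intros. rewrite preact_dir_u by auto. ring.
Qed.

Lemma act_dir_u_weighted_sum n1 d alpha u xi a : posU n1 d u -> (forall m, (m < d)%nat -> 0 <= xi m) -> (a < n1)%nat ->
  0 <= alpha a ->
  rsum n1 (fun l => rsum d (fun m => u l m * Rabs (act_dir d alpha u (dir_u l m) xi a))) = alpha a * act d alpha u xi a.
Proof.
  intros Hu Hx Ha Hal. rewrite <- act1_mul_preact by (apply (preact_nonneg n1); auto).
  rewrite (rsum_ext n1 _ (fun l => (act1 d alpha u xi a * preact d u xi l) * kron a l)).
  - rewrite (rsum_ext n1 _ (fun l => (act1 d alpha u xi a * preact d u xi l) * kron l a)).
    + apply rsum_kron_r; auto.
    + intros; unfold kron; rewrite Nat.eqb_sym; auto.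
  - intros l Hl. unfold preact. rewrite <- rsum_scal. rewrite <- rsum_scal_r. apply rsum_ext; intros m Hm.
    unfold act_dir. rewrite preact_dir_u by auto.
    assert (0 <= act1 d alpha u xi a) by (apply act1_nonneg; auto).
    assert (0 <= kron a l) by (unfold kron; destruct (Nat.eqb a l); lra).
    assert (0 <= u l m) by (left; apply Hu; auto).
    rewrite Rabs_right. ring. apply Rle_ge. specialize (Hx m Hm).
    apply Rmult_le_pos; auto. apply Rmult_le_pos; auto.
Qed.

Lemma preact_dir_u_weighted_sum n1 d u xi a (H : R) : posU n1 d u -> (forall m, (m < d)%nat -> 0 <= xi m) -> (a < n1)%nat ->
  0 <= H ->
  rsum n1 (fun l => rsum d (fun m => u l m * Rabs (H * preact_dir d (dir_u l m) xi a))) = H * preact d u xi a.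
Proof.
  intros Hu Hx Ha HH.
  rewrite (rsum_ext n1 _ (fun l => (H * preact d u xi l) * kron l a)).
  - apply rsum_kron_r; auto.
  - intros l Hl. unfold preact. rewrite <- rsum_scal. rewrite <- rsum_scal_r. apply rsum_ext; intros m Hm.
    rewrite preact_dir_u by auto. rewrite (kron_sym a l).
    assert (0 <= kron l a) by apply kron_nonneg.
    assert (0 <= u l m) by (left; apply Hu; auto).
    rewrite Rabs_right. ring. apply Rle_ge. specialize (Hx m Hm).
    apply Rmult_le_pos; auto. apply Rmult_le_pos; auto.
Qed.

Section Directional_bounds.

Variables (n K n1 d : nat) (x : nat -> nat -> R) (y : nat -> nat) (alpha : nat -> R).
Variables (eps : R) (w u : nat -> nat -> R) (Cw Cu : R).
Hypotheses (HD : data_ok n K n1 d x y alpha) (Heps : 0 < eps).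
Hypotheses (Hw : posW K n1 w) (Hu : posU n1 d u).
(* [Cw] and [Cu] are the bounds that [fr_weighted_le_PsiA] provides on [B_++]. *)
Hypotheses (HCw0 : 0 <= Cw)
  (HCw : forall i k, (i < n)%nat -> (k < K)%nat -> fr n1 d alpha w u k (x i) <= Cw).
Hypotheses (HCu0 : 0 <= Cu)
  (HCu : forall i k, (i < n)%nat -> (k < K)%nat ->
     rsum n1 (fun l => w k l * (alpha l * act d alpha u (x i) l)) <= Cu).

Lemma fr_dir_w_bound i k k' : (i < n)%nat -> (k < K)%nat -> (k' < K)%nat ->
  rsum n1 (fun l => rsum 1 (fun m => w k l * Rabs (fr_dir n1 d alpha w u (dir_w k l) dir0 (x i) k')))
  <= Cw.
Proof.
  intros Hi Hk Hk'.
  eapply Rle_trans; [|apply (HCw i k Hi Hk)]. rewrite fr_eq. apply rsum_le; intros l Hl.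
  rewrite rsum_one, fr_dir_w, Rabs_mult by auto.
  rewrite (Rabs_right (act _ _ _ _ _)) by (apply Rle_ge, act_nonneg).
  apply Rmult_le_compat_l; [left; apply Hw; auto|].
  pose proof (act_nonneg d alpha u (x i) l).
  unfold kron. destruct (Nat.eqb k' k); rewrite ?Rabs_R1, ?Rabs_R0; lra.
Qed.

(* The weights [u l m] turn the derivative of [z^alpha] back into [alpha z^alpha]. *)
Lemma fr_dir_u_bound i k' : (i < n)%nat -> (k' < K)%nat ->
  rsum n1 (fun l => rsum d (fun m => u l m * Rabs (fr_dir n1 d alpha w u dir0 (dir_u l m) (x i) k')))
  <= Cu.
Proof.
  destruct HD as [Hn [Hx [Hy Ha]]]. intros Hi Hk'.
  eapply Rle_trans; [|apply (HCu i k' Hi Hk')]. right. apply rsum_ext; intros l Hl.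
  rewrite (rsum_ext d _ (fun m => (w k' l * act1 d alpha u (x i) l) * (u l m * x i m))).
  - rewrite rsum_scal. fold (preact d u (x i) l).
    rewrite Rmult_assoc, act1_mul_preact by (apply (preact_nonneg n1); auto). ring.
  - intros m Hm. rewrite fr_dir_u by auto.
    assert (0 <= w k' l * act1 d alpha u (x i) l * x i m).
    { apply Rmult_le_pos; [apply Rmult_le_pos|]; auto; [left; apply Hw; auto|].
      apply act1_nonneg. specialize (Ha l Hl); lra. }
    rewrite Rabs_right by lra. ring.
Qed.

Lemma weighted_out_coef_dir_bound P Q (dWp dUp : nat -> nat -> nat -> nat -> R)
  (v : nat -> nat -> R) B i a :
  (i < n)%nat -> (a < n1)%nat -> 0 <= B ->
  (forall l m, (l < P)%nat -> (m < Q)%nat -> 0 <= v l m) ->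
  (forall k, (k < K)%nat -> rsum P (fun l => rsum Q (fun m =>
      v l m * Rabs (fr_dir n1 d alpha w u (dWp l m) (dUp l m) (x i) k))) <= B) ->
  rsum K (fun r => w r a * rsum P (fun l => rsum Q (fun m =>
      v l m * Rabs (out_coef_dir K n1 d alpha w u (dWp l m) (dUp l m) (x i) r))))
  <= 2 * B * rsum K (fun r => out_coef K n1 d alpha w u (x i) (y i) r * w r a).
Proof.
  intros Hi Ha HB Hv Hf. rewrite <- rsum_scal. apply rsum_le; intros r Hr.
  assert (0 < w r a) by (apply Hw; auto).
  replace (2 * B * (out_coef K n1 d alpha w u (x i) (y i) r * w r a))
    with (w r a * (2 * out_coef K n1 d alpha w u (x i) (y i) r * B)) by ring.
  apply Rmult_le_compat_l; [lra|]. apply out_coef_dir_bound; auto.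
Qed.

Lemma gradW_dir_w_bound i k a : (i < K)%nat -> (k < K)%nat -> (a < n1)%nat ->
  rsum n1 (fun l => rsum 1 (fun m =>
    w k l * Rabs (gradW_expr_dir n K n1 d x y alpha w u (dir_w k l) dir0 i a)))
  <= 2 * Cw * gradW_expr n K n1 d x y alpha eps w u i a.
Proof.
  destruct HD as [Hn [Hx [Hy Hal]]]. intros Hi Hk Ha.
  apply sample_mean_dir_bound; auto; try lra.
  { intros; left; apply Hw; auto. }
  { intros. apply Rmult_le_pos; [apply out_coef_nonneg; auto| apply act_nonneg]. }
  intros i' Hi'. unfold gradW_sample_dir, gradW_sample.
  set (h := act d alpha u (x i') a).
  assert (Hh : 0 <= h) by apply act_nonneg.
  rewrite (rsum_ext n1 _ (fun l => rsum 1 (fun m =>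
     w k l * Rabs (out_coef_dir K n1 d alpha w u (dir_w k l) dir0 (x i') i)) * h)).
  2:{ intros l Hl. rewrite <- rsum_scal_r. apply rsum_ext; intros.
      rewrite act_dir0, Rmult_0_r, Rplus_0_r, Rabs_mult, (Rabs_right h) by lra. ring. }
  rewrite rsum_scal_r.
  replace (2 * Cw * (out_coef K n1 d alpha w u (x i') (y i') i * h))
    with ((2 * out_coef K n1 d alpha w u (x i') (y i') i * Cw) * h) by ring.
  apply Rmult_le_compat_r; auto.
  apply (out_coef_dir_bound K n1 d alpha w u (x i') (y i') i n1 1
           (fun l _ => dir_w k l) (fun _ _ => dir0) (fun l _ => w k l)); auto.
  - intros; left; apply Hw; auto.
  - intros k' Hk'. apply fr_dir_w_bound; auto.
Qed.

Lemma gradW_dir_u_bound i a : (i < K)%nat -> (a < n1)%nat ->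
  rsum n1 (fun l => rsum d (fun m =>
    u l m * Rabs (gradW_expr_dir n K n1 d x y alpha w u dir0 (dir_u l m) i a)))
  <= (2 * Cu + ninf n1 alpha) * gradW_expr n K n1 d x y alpha eps w u i a.
Proof.
  destruct HD as [Hn [Hx [Hy Hal]]]. intros Hi Ha.
  assert (Ha1 := Hal a Ha). assert (Hni := alpha_le_ninf n1 alpha a Ha Ha1).
  apply sample_mean_dir_bound; auto; try lra.
  { intros; left; apply Hu; auto. }
  { intros. apply Rmult_le_pos; [apply out_coef_nonneg; auto| apply act_nonneg]. }
  intros i' Hi'. unfold gradW_sample_dir, gradW_sample.
  set (c := out_coef K n1 d alpha w u (x i') (y i') i).
  set (h := act d alpha u (x i') a).
  assert (Hc : 0 <= c) by (apply out_coef_nonneg; auto).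
  assert (Hh : 0 <= h) by apply act_nonneg.
  eapply Rle_trans.
  { apply (rsum2_le n1 d _ (fun l m =>
        (u l m * Rabs (out_coef_dir K n1 d alpha w u dir0 (dir_u l m) (x i') i)) * h
        + c * (u l m * Rabs (act_dir d alpha u (dir_u l m) (x i') a)))).
    intros l m Hl Hm. assert (0 <= u l m) by (left; apply Hu; auto).
    eapply Rle_trans; [apply Rmult_le_compat_l; [auto| apply Rabs_triang]|].
    rewrite !Rabs_mult, (Rabs_right h), (Rabs_right c) by lra. right; ring. }
  rewrite rsum2_plus, rsum2_scal, act_dir_u_weighted_sum by (auto; specialize (Hal a Ha); lra).
  rewrite (rsum_ext n1 _ (fun l => rsum d (fun m =>
     u l m * Rabs (out_coef_dir K n1 d alpha w u dir0 (dir_u l m) (x i') i)) * h))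
    by (intros; apply rsum_scal_r).
  rewrite rsum_scal_r. fold h.
  assert (Hcd : rsum n1 (fun l => rsum d (fun m =>
                  u l m * Rabs (out_coef_dir K n1 d alpha w u dir0 (dir_u l m) (x i') i)))
                <= 2 * c * Cu).
  { apply (out_coef_dir_bound K n1 d alpha w u (x i') (y i') i n1 d
             (fun _ _ => dir0) (fun l m => dir_u l m) (fun l m => u l m)); auto.
    - intros; left; apply Hu; auto.
    - intros k' Hk'. apply fr_dir_u_bound; auto. }
  assert (c * (alpha a * h) <= c * (ninf n1 alpha * h))
    by (apply Rmult_le_compat_l; auto; apply Rmult_le_compat_r; auto).
  assert (0 <= (2 * c * Cu - rsum n1 (fun l => rsum d (fun m =>
                  u l m * Rabs (out_coef_dir K n1 d alpha w u dir0 (dir_u l m) (x i') i)))) * h)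
    by (apply Rmult_le_pos; lra).
  nra.
Qed.

Lemma rsum_dir_w_split k a (c : nat -> R) (A : nat -> nat -> R) : (k < K)%nat -> (a < n1)%nat ->
  rsum n1 (fun l => w k l * rsum K (fun r => w r a * A l r + c r * Rabs (dir_w k l r a)))
  = rsum K (fun r => w r a * rsum n1 (fun l => rsum 1 (fun _ => w k l * A l r))) + c k * w k a.
Proof.
  intros Hk Ha.
  rewrite (rsum_ext n1 _ (fun l => rsum K (fun r => w r a * (w k l * A l r))
                                 + rsum K (fun r => c r * w k l * kron r k * kron l a))).
  - rewrite rsum_plus, !(rsum_swap n1 K). f_equal.
    + apply rsum_ext; intros r Hr. rewrite <- rsum_scal. apply rsum_ext; intros.
      rewrite rsum_one. ring.
    + rewrite (rsum_ext K _ (fun r => c r * w k a * kron r k)).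
      * rewrite rsum_kron_r by auto. ring.
      * intros r Hr. rewrite rsum_kron_r by auto. ring.
  - intros l Hl. rewrite <- rsum_plus, <- rsum_scal. apply rsum_ext; intros r Hr.
    unfold dir_w. rewrite Rabs_mult, !Rabs_right by (apply Rle_ge, kron_nonneg).
    rewrite (kron_sym a l). ring.
Qed.

Lemma gradU_sample_dir_w_abs_le k a b i l :
  (k < K)%nat -> (a < n1)%nat -> (b < d)%nat -> (i < n)%nat -> (l < n1)%nat ->
  w k l * Rabs (gradU_sample_dir K n1 d alpha w u (dir_w k l) dir0 (x i) (y i) a b)
  <= w k l * rsum K (fun r => w r a * Rabs (out_coef_dir K n1 d alpha w u (dir_w k l) dir0 (x i) r)
                              + out_coef K n1 d alpha w u (x i) (y i) r * Rabs (dir_w k l r a))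
     * (act1 d alpha u (x i) a * x i b).
Proof.
  destruct HD as [Hn [Hx [Hy Hal]]]. intros Hk Ha Hb Hi Hl.
  unfold gradU_sample_dir. set (h1 := act1 d alpha u (x i) a).
  assert (Hh1 : 0 <= h1) by (apply act1_nonneg; specialize (Hal a Ha); lra).
  assert (Hxb : 0 <= x i b) by (apply Hx; auto).
  assert (0 <= w k l) by (left; apply Hw; auto).
  rewrite act1_dir0, Rmult_0_r, Rplus_0_r, !Rabs_mult, (Rabs_right h1), (Rabs_right (x i b)) by lra.
  match goal with |- w k l * (Rabs ?S * h1 * x i b) <= _ =>
    replace (w k l * (Rabs S * h1 * x i b)) with (w k l * Rabs S * (h1 * x i b)) by ring end.
  apply Rmult_le_compat_r; [apply Rmult_le_pos; auto|].
  apply Rmult_le_compat_l; auto.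
  eapply Rle_trans; [apply rsum_abs|]. apply rsum_le; intros r Hr.
  eapply Rle_trans; [apply Rabs_triang|].
  assert (0 < w r a) by (apply Hw; auto).
  assert (0 <= out_coef K n1 d alpha w u (x i) (y i) r) by (apply out_coef_nonneg; auto).
  rewrite !Rabs_mult, (Rabs_right (w r a)), (Rabs_right (out_coef _ _ _ _ _ _ _ _ _)) by lra.
  right; ring.
Qed.

(* Moving [w_{k,l}] also moves the factor [w_{k,a}] of [gradU], which contributes [c_k w_{k,a}]. *)
Lemma sample_gradU_dir_w_bound k a b i :
  (k < K)%nat -> (a < n1)%nat -> (b < d)%nat -> (i < n)%nat ->
  rsum n1 (fun l => rsum 1 (fun m =>
    w k l * Rabs (gradU_sample_dir K n1 d alpha w u (dir_w k l) dir0 (x i) (y i) a b)))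
  <= (2 * Cw + 1) * gradU_sample K n1 d alpha w u (x i) (y i) a b.
Proof.
  pose proof HD as [Hn [Hx [Hy Hal]]]. intros Hk Ha Hb Hi.
  pose (c := fun r => out_coef K n1 d alpha w u (x i) (y i) r).
  pose (A := fun l r => Rabs (out_coef_dir K n1 d alpha w u (dir_w k l) dir0 (x i) r)).
  rewrite rsum_rsum1. eapply Rle_trans.
  { apply (rsum_le n1 _ (fun l => w k l * rsum K (fun r => w r a * A l r + c r * Rabs (dir_w k l r a))
                                  * (act1 d alpha u (x i) a * x i b))).
    intros l Hl. apply gradU_sample_dir_w_abs_le; auto. }
  rewrite rsum_scal_r, rsum_dir_w_split by auto. unfold gradU_sample, A, c.
  replace ((2 * Cw + 1) * (_ * act1 d alpha u (x i) a * x i b))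
    with ((2 * Cw + 1) * rsum K (fun r => out_coef K n1 d alpha w u (x i) (y i) r * w r a)
          * (act1 d alpha u (x i) a * x i b)) by ring.
  apply Rmult_le_compat_r.
  { apply Rmult_le_pos; [apply act1_nonneg; specialize (Hal a Ha); lra| apply Hx; auto]. }
  assert (H1 := weighted_out_coef_dir_bound n1 1 (fun l _ => dir_w k l) (fun _ _ => dir0)
                 (fun l _ => w k l) Cw i a Hi Ha HCw0
                 (fun l m Hl Hm => Rlt_le _ _ (Hw k l Hk Hl))
                 (fun k' Hk' => fr_dir_w_bound i k k' Hi Hk Hk')).
  assert (H2 : out_coef K n1 d alpha w u (x i) (y i) k * w k a
               <= rsum K (fun r => out_coef K n1 d alpha w u (x i) (y i) r * w r a)).
  { apply (rsum_single_ge K (fun r => out_coef K n1 d alpha w u (x i) (y i) r * w r a) k); auto.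
    intros; apply Rmult_le_pos; [apply out_coef_nonneg; auto| left; apply Hw; auto]. }
  cbv beta in H1. lra.
Qed.

Lemma gradU_sample_dir_u_abs_le a b i l m :
  (a < n1)%nat -> (b < d)%nat -> (i < n)%nat -> (l < n1)%nat -> (m < d)%nat ->
  u l m * Rabs (gradU_sample_dir K n1 d alpha w u dir0 (dir_u l m) (x i) (y i) a b)
  <= rsum K (fun r => w r a * (u l m * Rabs (out_coef_dir K n1 d alpha w u dir0 (dir_u l m) (x i) r)))
       * (act1 d alpha u (x i) a * x i b)
     + rsum K (fun r => out_coef K n1 d alpha w u (x i) (y i) r * w r a) * x i b
       * (u l m * Rabs (act2 d alpha u (x i) a * preact_dir d (dir_u l m) (x i) a)).
Proof.
  destruct HD as [Hn [Hx [Hy Hal]]]. intros Ha Hb Hi Hl Hm.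
  unfold gradU_sample_dir, act1_dir.
  set (h1 := act1 d alpha u (x i) a).
  set (Sc := rsum K (fun r => out_coef K n1 d alpha w u (x i) (y i) r * w r a)).
  set (S := rsum K (fun r => out_coef_dir K n1 d alpha w u dir0 (dir_u l m) (x i) r * w r a
                             + out_coef K n1 d alpha w u (x i) (y i) r * dir0 r a)).
  set (T := rsum K (fun r => w r a * Rabs (out_coef_dir K n1 d alpha w u dir0 (dir_u l m) (x i) r))).
  set (B := act2 d alpha u (x i) a * preact_dir d (dir_u l m) (x i) a).
  assert (Hh1 : 0 <= h1) by (apply act1_nonneg; specialize (Hal a Ha); lra).
  assert (Hxb : 0 <= x i b) by (apply Hx; auto).
  assert (Hul : 0 <= u l m) by (left; apply Hu; auto).
  assert (HSc : 0 <= Sc).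
  { apply rsum_nonneg; intros. apply Rmult_le_pos; [apply out_coef_nonneg; auto| left; apply Hw; auto]. }
  assert (HS : Rabs S <= T).
  { eapply Rle_trans; [apply rsum_abs|]. apply rsum_le; intros r Hr. unfold dir0.
    rewrite Rmult_0_r, Rplus_0_r, Rabs_mult, (Rabs_right (w r a)) by (left; apply Hw; auto).
    right; ring. }
  assert (Htri : Rabs (S * h1 + Sc * B) <= Rabs S * h1 + Sc * Rabs B).
  { eapply Rle_trans; [apply Rabs_triang|]. rewrite !Rabs_mult, (Rabs_right h1), (Rabs_right Sc) by lra.
    lra. }
  rewrite (rsum_ext K _ (fun r => u l m *
     (w r a * Rabs (out_coef_dir K n1 d alpha w u dir0 (dir_u l m) (x i) r)))) by (intros; ring).
  rewrite rsum_scal. fold T. rewrite Rabs_mult, (Rabs_right (x i b)) by lra.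
  assert (0 <= u l m * (T - Rabs S) * (h1 * x i b)) by (apply Rmult_le_pos; apply Rmult_le_pos; lra).
  assert (u l m * (Rabs (S * h1 + Sc * B) * x i b) <= u l m * ((Rabs S * h1 + Sc * Rabs B) * x i b))
    by (apply Rmult_le_compat_l; auto; apply Rmult_le_compat_r; auto).
  lra.
Qed.

(* The direction [u_{l,m}] hits [z^(alpha-1)], giving the extra [alpha_a - 1 <= ||alpha||_oo - 1]. *)
Lemma sample_gradU_dir_u_bound a b i : (a < n1)%nat -> (b < d)%nat -> (i < n)%nat ->
  rsum n1 (fun l => rsum d (fun m =>
    u l m * Rabs (gradU_sample_dir K n1 d alpha w u dir0 (dir_u l m) (x i) (y i) a b)))
  <= (2 * Cu + ninf n1 alpha - 1) * gradU_sample K n1 d alpha w u (x i) (y i) a b.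
Proof.
  pose proof HD as [Hn [Hx [Hy Hal]]]. intros Ha Hb Hi.
  assert (Ha1 := Hal a Ha). assert (Hni := alpha_le_ninf n1 alpha a Ha Ha1).
  eapply Rle_trans; [apply rsum2_le; intros l m Hl Hm; apply gradU_sample_dir_u_abs_le; auto|].
  unfold gradU_sample.
  set (h1 := act1 d alpha u (x i) a).
  set (Sc := rsum K (fun r => out_coef K n1 d alpha w u (x i) (y i) r * w r a)).
  assert (Hh1 : 0 <= h1) by (apply act1_nonneg; lra).
  assert (Hxb : 0 <= x i b) by (apply Hx; auto).
  assert (HSc : 0 <= Sc).
  { apply rsum_nonneg; intros. apply Rmult_le_pos; [apply out_coef_nonneg; auto| left; apply Hw; auto]. }
  rewrite rsum2_plus, rsum2_scal, preact_dir_u_weighted_sum by (auto; apply act2_nonneg; auto).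
  rewrite act2_mul_preact by (apply (preact_nonneg n1); auto). fold h1.
  rewrite (rsum_ext n1 _ (fun l => rsum d (fun m =>
     rsum K (fun r => w r a * (u l m * Rabs (out_coef_dir K n1 d alpha w u dir0 (dir_u l m) (x i) r))))
     * (h1 * x i b))) by (intros; apply rsum_scal_r).
  rewrite rsum_scal_r, rsum3_swap.
  rewrite (rsum_ext K _ (fun r => w r a * rsum n1 (fun l => rsum d (fun m =>
     u l m * Rabs (out_coef_dir K n1 d alpha w u dir0 (dir_u l m) (x i) r)))))
    by (intros; rewrite <- rsum2_scal; reflexivity).
  assert (H1 := weighted_out_coef_dir_bound n1 d (fun _ _ => dir0) (fun l m => dir_u l m)
                 (fun l m => u l m) Cu i a Hi Ha HCu0
                 (fun l m Hl Hm => Rlt_le _ _ (Hu l m Hl Hm))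
                 (fun k' Hk' => fr_dir_u_bound i k' Hi Hk')).
  cbv beta in H1. fold Sc in H1.
  assert (Hhx : 0 <= h1 * x i b) by (apply Rmult_le_pos; auto).
  assert (0 <= (ninf n1 alpha - alpha a) * (Sc * h1 * x i b))
    by (apply Rmult_le_pos; [lra| apply Rmult_le_pos; [apply Rmult_le_pos|]; lra]).
  pose proof (Rmult_le_compat_r _ _ _ Hhx H1).
  lra.
Qed.

Lemma gradU_dir_w_bound k a b : (k < K)%nat -> (a < n1)%nat -> (b < d)%nat ->
  rsum n1 (fun l => rsum 1 (fun m =>
    w k l * Rabs (gradU_expr_dir n K n1 d x y alpha w u (dir_w k l) dir0 a b)))
  <= (2 * Cw + 1) * gradU_expr n K n1 d x y alpha eps w u a b.
Proof.
  intros Hk Ha Hb. destruct HD as [Hn [Hx [Hy Hal]]].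
  apply sample_mean_dir_bound; auto; try lra.
  - intros; left; apply Hw; auto.
  - intros i Hi. apply Rmult_le_pos; [apply Rmult_le_pos|]; auto.
    + apply rsum_nonneg; intros. apply Rmult_le_pos; [apply out_coef_nonneg; auto| left; apply Hw; auto].
    + apply act1_nonneg. specialize (Hal a Ha); lra.
  - intros i Hi. apply sample_gradU_dir_w_bound; auto.
Qed.

Lemma gradU_dir_u_bound a b : (a < n1)%nat -> (b < d)%nat ->
  rsum n1 (fun l => rsum d (fun m =>
    u l m * Rabs (gradU_expr_dir n K n1 d x y alpha w u dir0 (dir_u l m) a b)))
  <= (2 * Cu + ninf n1 alpha - 1) * gradU_expr n K n1 d x y alpha eps w u a b.
Proof.
  intros Ha Hb. destruct HD as [Hn [Hx [Hy Hal]]].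
  assert (Ha1 := Hal a Ha). assert (Hni := alpha_le_ninf n1 alpha a Ha Ha1).
  apply sample_mean_dir_bound; auto; try lra.
  - intros; left; apply Hu; auto.
  - intros i Hi. apply Rmult_le_pos; [apply Rmult_le_pos|]; auto.
    + apply rsum_nonneg; intros. apply Rmult_le_pos; [apply out_coef_nonneg; auto| left; apply Hw; auto].
    + apply act1_nonneg. specialize (Hal a Ha); lra.
  - intros i Hi. apply sample_gradU_dir_u_bound; auto.
Qed.

Variables (pw pu rhow rhou : R).
Hypotheses (Hpw : 1 < pw) (Hpu : 1 < pu) (Hrhow : 0 < rhow) (Hrhou : 0 < rhou).

Let Ph := Phi n K n1 d x y alpha eps.

Lemma GW_w_bound i k j : (i < K)%nat -> (k < K)%nat -> (j < n1)%nat ->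
  rsum n1 (fun l => Rabs (Deriv (fun t => GW Ph n1 pw rhow i j (upd2 w k l t) u) (w k l)) * w k l)
  <= 2 * (conj pw - 1) * (2 * Cw) * GW Ph n1 pw rhow i j w u.
Proof.
  intros Hi Hk Hj. pose proof HD as [Hn [Hx [Hy Hal]]].
  unfold Ph. rewrite GW_eq, (rsum_rsum1_expand n1) by auto.
  apply (Deriv_normalized_psi_bound n1 1 n1 1 pw rhow
    (fun l _ t a' _ => gradW_expr n K n1 d x y alpha eps (upd2 w k l t) u i a')
    (fun l _ a' _ => gradW_expr_dir n K n1 d x y alpha w u (dir_w k l) dir0 i a')
    (fun l _ => w k l) (fun a' _ => gradW_expr n K n1 d x y alpha eps w u i a') (fun l _ => w k l)
    _ j 0%nat (2 * Cw)); auto; try lra.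
  - intros; apply gradW_expr_pos; auto.
  - intros; apply gradW_expr_pos; auto.
  - intros l m Hl Hm a' b' Ha' Hb'. eapply dl_eq_val.
    + apply (dl_gradW_expr n K n1 d x y alpha eps (fun t => upd2 w k l t) (fun _ => u));
        auto; intros; [apply dl_upd2| apply dl_const| apply (preact_regular_of_pos n1); auto].
    + rewrite upd2_same. reflexivity.
  - intros. rewrite upd2_same. reflexivity.
  - intros l m Hl Hm t Ht. apply GW_eq; auto.
  - intros; left; auto.
  - intros a' b' Ha' Hb'. apply gradW_dir_w_bound; auto.
Qed.

Lemma GW_u_bound i j : (i < K)%nat -> (j < n1)%nat ->
  rsum n1 (fun l => rsum d (fun m =>
    Rabs (Deriv (fun t => GW Ph n1 pw rhow i j w (upd2 u l m t)) (u l m)) * u l m))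
  <= 2 * (conj pw - 1) * (2 * Cu + ninf n1 alpha) * GW Ph n1 pw rhow i j w u.
Proof.
  intros Hi Hj. pose proof HD as [Hn [Hx [Hy Hal]]].
  assert (Hni := ninf_ge1 n1 alpha j Hj (Hal j Hj)).
  unfold Ph. rewrite GW_eq by auto.
  apply (Deriv_normalized_psi_bound n1 1 n1 d pw rhow
    (fun l m t a' _ => gradW_expr n K n1 d x y alpha eps w (upd2 u l m t) i a')
    (fun l m a' _ => gradW_expr_dir n K n1 d x y alpha w u dir0 (dir_u l m) i a')
    (fun l m => u l m) (fun a' _ => gradW_expr n K n1 d x y alpha eps w u i a') (fun l m => u l m)
    _ j 0%nat (2 * Cu + ninf n1 alpha)); auto; try lra.
  - intros; apply gradW_expr_pos; auto.
  - intros; apply gradW_expr_pos; auto.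
  - intros l m Hl Hm a' b' Ha' Hb'. eapply dl_eq_val.
    + apply (dl_gradW_expr n K n1 d x y alpha eps (fun _ => w) (fun t => upd2 u l m t));
        auto; intros; [apply dl_const| apply dl_upd2|].
      rewrite upd2_same. apply (preact_regular_of_pos n1); auto.
    + rewrite upd2_same. reflexivity.
  - intros. rewrite upd2_same. reflexivity.
  - intros l m Hl Hm t Ht. apply GW_eq; auto. apply posU_upd2; auto.
  - intros; left; auto.
  - intros a' b' Ha' Hb'. apply gradW_dir_u_bound; auto.
Qed.

Lemma GU_w_bound k a b : (k < K)%nat -> (a < n1)%nat -> (b < d)%nat ->
  rsum n1 (fun l => Rabs (Deriv (fun t => GU Ph n1 d pu rhou a b (upd2 w k l t) u) (w k l)) * w k l)
  <= 2 * (conj pu - 1) * (2 * Cw + 1) * GU Ph n1 d pu rhou a b w u.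
Proof.
  intros Hk Ha Hb. pose proof HD as [Hn [Hx [Hy Hal]]].
  unfold Ph. rewrite GU_eq, (rsum_rsum1_expand n1) by auto.
  apply (Deriv_normalized_psi_bound n1 d n1 1 pu rhou
    (fun l _ t a' b' => gradU_expr n K n1 d x y alpha eps (upd2 w k l t) u a' b')
    (fun l _ a' b' => gradU_expr_dir n K n1 d x y alpha w u (dir_w k l) dir0 a' b')
    (fun l _ => w k l) (fun a' b' => gradU_expr n K n1 d x y alpha eps w u a' b') (fun l _ => w k l)
    _ a b (2 * Cw + 1)); auto; try lra.
  - intros; apply gradU_expr_pos; auto.
  - intros; apply gradU_expr_pos; auto. apply posW_upd2; auto.
  - intros l m Hl Hm a' b' Ha' Hb'. eapply dl_eq_val.
    + apply (dl_gradU_expr n K n1 d x y alpha eps (fun t => upd2 w k l t) (fun _ => u));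
        auto; intros; [apply dl_upd2| apply dl_const| apply (preact_regular_of_pos n1); auto].
    + rewrite upd2_same. reflexivity.
  - intros. rewrite upd2_same. reflexivity.
  - intros l m Hl Hm t Ht. apply GU_eq; auto.
  - intros; left; auto.
  - intros a' b' Ha' Hb'. apply gradU_dir_w_bound; auto.
Qed.

Lemma GU_u_bound a b : (a < n1)%nat -> (b < d)%nat ->
  rsum n1 (fun l => rsum d (fun m =>
    Rabs (Deriv (fun t => GU Ph n1 d pu rhou a b w (upd2 u l m t)) (u l m)) * u l m))
  <= 2 * (conj pu - 1) * (2 * Cu + ninf n1 alpha - 1) * GU Ph n1 d pu rhou a b w u.
Proof.
  intros Ha Hb. pose proof HD as [Hn [Hx [Hy Hal]]].
  assert (Hni := ninf_ge1 n1 alpha a Ha (Hal a Ha)).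
  unfold Ph. rewrite GU_eq by auto.
  apply (Deriv_normalized_psi_bound n1 d n1 d pu rhou
    (fun l m t a' b' => gradU_expr n K n1 d x y alpha eps w (upd2 u l m t) a' b')
    (fun l m a' b' => gradU_expr_dir n K n1 d x y alpha w u dir0 (dir_u l m) a' b')
    (fun l m => u l m) (fun a' b' => gradU_expr n K n1 d x y alpha eps w u a' b') (fun l m => u l m)
    _ a b (2 * Cu + ninf n1 alpha - 1)); auto; try lra.
  - intros; apply gradU_expr_pos; auto.
  - intros; apply gradU_expr_pos; auto.
  - intros l m Hl Hm a' b' Ha' Hb'. eapply dl_eq_val.
    + apply (dl_gradU_expr n K n1 d x y alpha eps (fun _ => w) (fun t => upd2 u l m t));
        auto; intros; [apply dl_const| apply dl_upd2|].
      rewrite upd2_same. apply (preact_regular_of_pos n1); auto.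
    + rewrite upd2_same. reflexivity.
  - intros. rewrite upd2_same. reflexivity.
  - intros l m Hl Hm t Ht. apply GU_eq; auto. apply posU_upd2; auto.
  - intros; left; auto.
  - intros a' b' Ha' Hb'. apply gradU_dir_u_bound; auto.
Qed.

End Directional_bounds.

Lemma Amat_ww K pw pu Cw Cu ainf i k : (i < K)%nat -> (k < K)%nat ->
  Amat K pw pu Cw Cu ainf i k = 2 * (conj pw - 1) * (2 * Cw).
Proof. intros Hi Hk. unfold Amat, Mmat. rewrite (proj2 (Nat.ltb_lt i K) Hi), (proj2 (Nat.ltb_lt k K) Hk). ring. Qed.

Lemma Amat_wu K pw pu Cw Cu ainf i : (i < K)%nat ->
  Amat K pw pu Cw Cu ainf i K = 2 * (conj pw - 1) * (2 * Cu + ainf).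
Proof. intros Hi. unfold Amat, Mmat. apply Nat.ltb_lt in Hi. rewrite Hi, Nat.ltb_irrefl. ring. Qed.

Lemma Amat_uw K pw pu Cw Cu ainf k : (k < K)%nat ->
  Amat K pw pu Cw Cu ainf K k = 2 * (conj pu - 1) * (2 * Cw + 1).
Proof. intros Hk. unfold Amat, Mmat. apply Nat.ltb_lt in Hk. rewrite Hk, Nat.ltb_irrefl. ring. Qed.

Lemma Amat_uu K pw pu Cw Cu ainf :
  Amat K pw pu Cw Cu ainf K K = 2 * (conj pu - 1) * (2 * Cu + ainf - 1).
Proof. unfold Amat, Mmat. rewrite Nat.ltb_irrefl. ring. Qed.

Theorem mainTheorem12 (n K n1 d : nat) (x : nat -> nat -> R) (y : nat -> nat)
  (alpha : nat -> R) (eps pw pu rhow rhou : R)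
  (hn : (0 < n)%nat)
  (hx : forall i m, (i < n)%nat -> (m < d)%nat -> 0 <= x i m)
  (hy : forall i, (i < n)%nat -> (y i < K)%nat)
  (halpha : forall l, (l < n1)%nat -> 1 <= alpha l)
  (heps : 0 < eps) (hpw : 1 < pw) (hpu : 1 < pu) (hrw : 0 < rhow) (hru : 0 < rhou) :
  let Ph := Phi n K n1 d x y alpha eps in
  let rx := rho_x n d x pu in
  let Cw := rhow * PsiA n1 alpha (conj pw) pu (fun _ => 1) (rhou * rx) in
  let Cu := rhow * PsiA n1 alpha (conj pw) pu alpha (rhou * rx) in
  let A := Amat K pw pu Cw Cu (ninf n1 alpha) in
  forall (i k j a b : nat) (w u : nat -> nat -> R),
    (i < K)%nat -> (k < K)%nat -> (j < n1)%nat -> (a < n1)%nat -> (b < d)%nat ->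
    inBpp K n1 d pw pu rhow rhou w u ->
    let Fw := GW Ph n1 pw rhow i j in
    let Fu := GU Ph n1 d pu rhou a b in
    rsum n1 (fun l => Rabs (Deriv (fun t => Fw (upd2 w k l t) u) (w k l)) * w k l)
      <= A i k * Fw w u /\
    rsum n1 (fun l => rsum d (fun m =>
      Rabs (Deriv (fun t => Fw w (upd2 u l m t)) (u l m)) * u l m))
      <= A i K * Fw w u /\
    rsum n1 (fun l => Rabs (Deriv (fun t => Fu (upd2 w k l t) u) (w k l)) * w k l)
      <= A K k * Fu w u /\
    rsum n1 (fun l => rsum d (fun m =>
      Rabs (Deriv (fun t => Fu w (upd2 u l m t)) (u l m)) * u l m))
      <= A K K * Fu w u.
Proof.
  intros Ph rx Cw Cu A i k j a b w u Hi Hk Hj Ha Hb HB Fw Fu.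
  assert (HD : data_ok n K n1 d x y alpha) by (repeat split; auto).
  pose proof HB as [Hw [Hu _]].
  assert (HCw0 : 0 <= Cw) by (apply Rmult_le_pos; [lra| apply PsiA_nonneg]).
  assert (HCu0 : 0 <= Cu) by (apply Rmult_le_pos; [lra| apply PsiA_nonneg]).
  assert (HCw : forall i' k', (i' < n)%nat -> (k' < K)%nat -> fr n1 d alpha w u k' (x i') <= Cw).
  { intros i' k' Hi' Hk'. eapply Rle_trans; [|apply (fr_weighted_le_PsiA n n1 d x alpha pw pu
      rhow rhou K w u i' k' (fun _ => 1)); auto; intros; lra].
    right. rewrite fr_eq. apply rsum_ext; intros; ring. }
  assert (HCu : forall i' k', (i' < n)%nat -> (k' < K)%nat ->
            rsum n1 (fun l => w k' l * (alpha l * act d alpha u (x i') l)) <= Cu).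
  { intros i' k' Hi' Hk'. apply (fr_weighted_le_PsiA n n1 d x alpha pw pu rhow rhou K); auto.
    intros l Hl; specialize (halpha l Hl); lra. }
  unfold A, Fw, Fu, Ph.
  rewrite Amat_ww, Amat_wu, Amat_uw, Amat_uu by auto.
  repeat split.
  - eapply GW_w_bound; eauto.
  - eapply GW_u_bound; eauto.
  - eapply GU_w_bound; eauto.
  - eapply GU_u_bound; eauto.
Qed.
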